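(* Let $T>0$ and let $(c,\rho,\theta,u)$ be a smooth solution of (NS) on $[0,T]\times\mathbb T$ with $c\in[0,1]$ and assume there are positive constants with $\underline\rho\le\rho\le\overline\rho$ and $\underline\theta\le\theta\le\overline\theta$ on $[0,T]\times\mathbb T$. Then there exist constants $C_8,C_9>0$, depending only on $T$, these bounds, $\mu_\pm,\gamma_\pm,c_{v,\pm}$, $\int_0^1\sigma_0^2$ and $\int_0^1\rho_0E_0$, such that $\int_0^1(\partial_xu)^2(t)\le C_8$ for all $t\in[0,T]$ and $\int_0^T\|\partial_xu\|_{L^\infty(\mathbb T)}^2\le C_9$; i.e. $\partial_xu\in L^\infty(0,T;L^2(\mathbb T))\cap L^2(0,T;L^\infty(\mathbb T))$ using only $\sigma_0\in L^2(\mathbb T)$.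
   Context: $\mathbb T=\mathbb R/\mathbb Z$ is identified with $[0,1)$. Fix constants $\mu_\pm>0$, $\gamma_\pm>1$, $c_{v,\pm}>0$, and for $c\in[0,1]$ set $\mu(c)=c\mu_++(1-c)\mu_-$, $\gamma(c)=c\gamma_++(1-c)\gamma_-$, $c_v(c)=c\,c_{v,+}+(1-c)c_{v,-}$. For unknowns $c,\rho,\theta,u$ on $[0,T]\times\mathbb T$, write $p=(\gamma(c)-1)\rho\theta$, $\sigma=\mu(c)\partial_xu-p$, $E=u^2/2+c_v(c)\theta$. The mesoscopic system (NS) is $\partial_t\rho+\partial_x(\rho u)=0$, $\partial_t(\rho c)+\partial_x(\rho c u)=0$, $\partial_t(\rho u)+\partial_x(\rho u^2)=\partial_x\sigma$, $\partial_t(\rho E)+\partial_x(\rho E u)=\partial_x(\sigma u)$, with initial data $\rho_0,c_0,u_0,\theta_0$, $E_0=u_0^2/2+c_v(c_0)\theta_0$, and $\sigma_0=\sigma|_{t=0}$. *)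

From Stdlib Require Import Reals List.
From Coquelicot Require Import Coquelicot.
Open Scope R_scope.

(* Fields are functions of (t, x) in R x R; x is the spatial variable,
   1-periodicity in x encodes the torus T = R/Z. *)
Definition field := R -> R -> R.

Definition pDt (f : field) : field := fun t x => Derive (fun s => f s x) t.
Definition pDx (f : field) : field := fun t x => Derive (fun y => f t y) x.

(* iterated mixed partial derivatives along a word (true = d/dt, false = d/dx) *)
Fixpoint Dw (w : list bool) (f : field) : field :=
  match w with
  | nil => f
  | b :: w' => (if b then pDt else pDx) (Dw w' f)
  end.

Definition smooth (f : field) : Prop :=
  forall w : list bool,
    (forall t x, ex_derive (fun s => Dw w f s x) t /\ ex_derive (fun y => Dw w f t y) x) /\
    (forall t x, continuous (fun p : R * R => Dw w f (fst p) (snd p)) (t, x)).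

Definition periodic1 (f : field) : Prop := forall t x, f t (x + 1) = f t x.

(* L^infinity(T) norm of a 1-periodic function: sup over one period [0,1] *)
Definition Linf_norm (g : R -> R) : R :=
  real (Lub_Rbar (fun y => exists x, 0 <= x <= 1 /\ y = Rabs (g x))).

Definition mix (a_plus a_minus c : R) : R := c * a_plus + (1 - c) * a_minus.

Section NS.
Variables (mu_p mu_m gam_p gam_m cv_p cv_m : R).

Definition muc (c : R) := mix mu_p mu_m c.
Definition gamc (c : R) := mix gam_p gam_m c.
Definition cvc (c : R) := mix cv_p cv_m c.

Definition pres (c rho theta : field) : field :=
  fun t x => (gamc (c t x) - 1) * rho t x * theta t x.
Definition sigmaNS (c rho theta u : field) : field :=
  fun t x => muc (c t x) * pDx u t x - pres c rho theta t x.
Definition energyNS (c theta u : field) : field :=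
  fun t x => u t x ^ 2 / 2 + cvc (c t x) * theta t x.

Definition NS_system (T : R) (c rho theta u : field) : Prop :=
  forall t x, 0 <= t <= T ->
    pDt rho t x + pDx (fun s y => rho s y * u s y) t x = 0 /\
    pDt (fun s y => rho s y * c s y) t x + pDx (fun s y => rho s y * c s y * u s y) t x = 0 /\
    pDt (fun s y => rho s y * u s y) t x + pDx (fun s y => rho s y * u s y ^ 2) t x
      = pDx (sigmaNS c rho theta u) t x /\
    pDt (fun s y => rho s y * energyNS c theta u s y) t x
      + pDx (fun s y => rho s y * energyNS c theta u s y * u s y) t x
      = pDx (fun s y => sigmaNS c rho theta u s y * u s y) t x.
End NS.

From Stdlib Require Import Reals Lra List.
From Coquelicot Require Import Coquelicot.
Open Scope R_scope.

(** Integrating the internal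
    energy equation over the torus gives [d/dt ∫ ρ c_v θ = ∫ σ ∂x u], and since
    [σ = μ ∂x u - p] with [p] bounded, the bounds on [ρ] and [θ] alone control
    [∫_0^T ∫ (∂x u)^2].  Along the non-conservative form of (NS), the effective
    viscous flux satisfies
      [d/dt ∫ σ^2/μ = -2 ∫ (∂x σ)^2/ρ - ∫ b σ^2 ∂x u],  [b = (1 + 2 (γ-1)/c_v)/μ];
    the cubic term is absorbed with the one-dimensional Sobolev bound
    [sup σ^2 <= 2 ∫ σ^2 + 2 ∫ (∂x σ)^2] and Young's inequality, which leaves
    [d/dt Y + ∫ (∂x σ)^2/ρ_max <= A (Z + 1) (Y + 1)] for [Y = ∫ σ^2/μ],
    [Z = ∫ (∂x u)^2].  Gronwall bounds [Y] uniformly in time, and with it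
    [∫ (∂x u)^2 = ∫ ((σ + p)/μ)^2]; integrating the inequality once more bounds
    [∫_0^T ∫ (∂x σ)^2], which controls [sup (∂x u)^2] through the Sobolev bound. *)

(** [ring] on an equation stated at a Coquelicot structure whose carrier is [R]. *)
Ltac ring_R := lazymatch goal with |- ?a = ?b => change (@eq R a b); ring end.

Lemma continuous_of_eps_delta (f : R -> R) x :
  (forall eps, 0 < eps -> exists d, 0 < d /\
     forall y, Rabs (y - x) < d -> Rabs (f y - f x) < eps) ->
  continuous f x.
Proof.
  intros H. apply continuity_pt_filterlim. intros eps He.
  destruct (H eps He) as [d [Hd Hy]].
  exists d; split; auto. intros y [_ Hyd]. apply Hy, Hyd.
Qed.

Lemma continuous_slice (f : R -> R -> R) t x :
  continuity_2d_pt f t x -> continuous (fun y => f t y) x.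
Proof.
  intros H. apply (continuous_comp_2 (fun _ => t) (fun y => y) f).
  - apply continuous_const.
  - apply continuous_id.
  - apply continuity_2d_pt_filterlim, H.
Qed.

Lemma continuity_2d_pt_pow2 (f : R -> R -> R) t x : continuity_2d_pt f t x ->
  continuity_2d_pt (fun s y => f s y ^ 2) t x.
Proof.
  intros H. apply continuity_2d_pt_ext with (f := fun s y => f s y * f s y).
  - intros; ring.
  - apply continuity_2d_pt_mult; auto.
Qed.

Lemma continuity_2d_pt_div (f g : R -> R -> R) t x :
  continuity_2d_pt f t x -> continuity_2d_pt g t x -> g t x <> 0 ->
  continuity_2d_pt (fun s y => f s y / g s y) t x.
Proof.
  intros Hf Hg Hn. apply continuity_2d_pt_mult; auto.
  apply continuity_2d_pt_inv; auto.
Qed.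

Lemma continuity_2d_pt_unif_slice (g : R -> R -> R) a b t0 :
  (forall y, a <= y <= b -> continuity_2d_pt g t0 y) ->
  forall eps, 0 < eps -> exists d, 0 < d /\
    forall s y, Rabs (s - t0) < d -> a <= y <= b -> Rabs (g s y - g t0 y) < eps.
Proof.
  intros H eps He.
  destruct (uniform_continuity_2d_1d' g a b t0 H (mkposreal eps He)) as [d Hd].
  exists d; split; [apply cond_pos|]. intros s y Hs Hy.
  pose proof (cond_pos d). apply Rabs_def2 in Hs.
  apply (Hd y t0 y s Hy); auto; try lra.
  rewrite Rminus_eq_0, Rabs_R0; apply cond_pos.
Qed.

(** Coquelicot states these for an abstract normed module, with [plus] and
    [scal]; the versions below unify with [Rplus] and [Rmult] directly. *)

Lemma RInt_extR (f g : R -> R) a b : a <= b ->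
  (forall x, a <= x <= b -> f x = g x) -> RInt f a b = RInt g a b.
Proof.
  intros Hab H. apply RInt_ext. intros x Hx.
  rewrite Rmin_left, Rmax_right in Hx by lra. apply H; lra.
Qed.

Lemma RInt_plusR (f g : R -> R) a b : ex_RInt f a b -> ex_RInt g a b ->
  RInt (fun x => f x + g x) a b = RInt f a b + RInt g a b.
Proof. exact (RInt_plus f g a b). Qed.

Lemma RInt_minusR (f g : R -> R) a b : ex_RInt f a b -> ex_RInt g a b ->
  RInt (fun x => f x - g x) a b = RInt f a b - RInt g a b.
Proof. exact (RInt_minus f g a b). Qed.

Lemma RInt_scalR (f : R -> R) a b k : ex_RInt f a b ->
  RInt (fun x => k * f x) a b = k * RInt f a b.
Proof. exact (RInt_scal f a b k). Qed.

Lemma RInt_constR a b k : RInt (fun _ => k) a b = k * (b - a).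
Proof. rewrite RInt_const. unfold scal; simpl; unfold mult; simpl. ring. Qed.

Lemma ex_RInt_plusR (f g : R -> R) a b : ex_RInt f a b -> ex_RInt g a b ->
  ex_RInt (fun x => f x + g x) a b.
Proof. exact (ex_RInt_plus f g a b). Qed.

Lemma ex_RInt_minusR (f g : R -> R) a b : ex_RInt f a b -> ex_RInt g a b ->
  ex_RInt (fun x => f x - g x) a b.
Proof. exact (ex_RInt_minus f g a b). Qed.

Lemma ex_RInt_scalR (f : R -> R) a b k : ex_RInt f a b ->
  ex_RInt (fun x => k * f x) a b.
Proof. exact (ex_RInt_scal f a b k). Qed.

Lemma ex_RInt_constR a b (k : R) : ex_RInt (fun _ => k) a b.
Proof. exact (ex_RInt_const a b k). Qed.

Lemma RInt_leR (f g : R -> R) a b : a <= b -> ex_RInt f a b -> ex_RInt g a b ->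
  (forall x, a <= x <= b -> f x <= g x) -> RInt f a b <= RInt g a b.
Proof. intros Hab Hf Hg H. apply RInt_le; auto. intros x Hx; apply H; lra. Qed.

Lemma RInt_ge0 (f : R -> R) a b : a <= b -> ex_RInt f a b ->
  (forall x, a <= x <= b -> 0 <= f x) -> 0 <= RInt f a b.
Proof. intros Hab Hf H. apply RInt_ge_0; auto. intros x Hx; apply H; lra. Qed.

Lemma ex_RInt_continuousR (h : R -> R) a b : a <= b ->
  (forall y, a <= y <= b -> continuous h y) -> ex_RInt h a b.
Proof.
  intros Hab H. apply (ex_RInt_continuous (V := R_CompleteNormedModule)).
  intros z Hz. rewrite Rmin_left, Rmax_right in Hz by lra. auto.
Qed.

Lemma ex_RInt_slice (G : R -> R -> R) t a b : a <= b ->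
  (forall y, a <= y <= b -> continuity_2d_pt G t y) -> ex_RInt (fun y => G t y) a b.
Proof. intros Hab H. apply ex_RInt_continuousR; auto. intros; apply continuous_slice, H; auto. Qed.

Lemma RInt_le_affine (f g : R -> R) a b k m : a <= b ->
  ex_RInt f a b -> ex_RInt g a b ->
  (forall y, a <= y <= b -> f y <= k * g y + m) ->
  RInt f a b <= k * RInt g a b + m * (b - a).
Proof.
  intros Hab Ef Eg H. rewrite <- RInt_constR, <- RInt_scalR, <- RInt_plusR by
    auto using ex_RInt_scalR, ex_RInt_constR.
  apply RInt_leR; auto using ex_RInt_plusR, ex_RInt_scalR, ex_RInt_constR.
Qed.

Lemma ex_derive_continuousR (f : R -> R) x : ex_derive f x -> continuous f x.
Proof. exact (ex_derive_continuous (K := R_AbsRing) (V := R_NormedModule) f x). Qed.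

Lemma continuous_sq (h : R -> R) x : continuous h x -> continuous (fun y => h y ^ 2) x.
Proof.
  intros H. apply continuous_ext with (f := fun y => mult (h y) (h y)).
  - intros y; unfold mult; simpl; ring.
  - apply (@continuous_mult _ R_AbsRing); auto.
Qed.

Lemma RInt_is_derive (f df : R -> R) a b : a <= b ->
  (forall x, a <= x <= b -> is_derive f x (df x)) ->
  (forall x, a <= x <= b -> continuous df x) ->
  RInt df a b = f b - f a.
Proof.
  intros Hab Hd Hc. apply is_RInt_unique.
  apply (is_RInt_derive (V := R_CompleteNormedModule));
    intros x Hx; rewrite Rmin_left, Rmax_right in Hx by lra; auto.
Qed.

Lemma RInt_derive_periodic (H h : R -> R) :
  (forall x, 0 <= x <= 1 -> is_derive H x (h x)) ->
  (forall x, 0 <= x <= 1 -> continuous h x) -> H 1 = H 0 -> RInt h 0 1 = 0.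
Proof. intros Hd Hc Hp. rewrite (RInt_is_derive H h 0 1); auto; lra. Qed.

Lemma RInt_dissipation_le (F dF g h : R -> R) a b : a <= b ->
  (forall s, a <= s <= b -> is_derive F s (dF s)) ->
  (forall s, a <= s <= b -> continuous dF s) -> ex_RInt g a b -> ex_RInt h a b ->
  (forall s, a <= s <= b -> g s + dF s <= h s) -> RInt g a b + (F b - F a) <= RInt h a b.
Proof.
  intros Hab Hd Hc Hg Hh H.
  assert (EdF : ex_RInt dF a b) by (apply ex_RInt_continuousR; auto).
  rewrite <- (RInt_is_derive F dF a b), <- RInt_plusR by auto.
  apply RInt_leR; auto using ex_RInt_plusR.
Qed.

Lemma Gronwall_log (Y dY k : R -> R) T : 0 <= T ->
  (forall s, 0 <= s <= T -> is_derive Y s (dY s)) ->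
  (forall s, 0 <= s <= T -> continuous dY s) ->
  (forall s, 0 <= s <= T -> continuous k s) ->
  (forall s, 0 <= s <= T -> 0 <= Y s) ->
  (forall s, 0 <= s <= T -> dY s <= k s * (Y s + 1)) ->
  forall t, 0 <= t <= T -> Y t + 1 <= (Y 0 + 1) * exp (RInt k 0 t).
Proof.
  intros HT Hd Hc Hk Hpos H t Ht.
  assert (Hp : forall s, 0 <= s <= T -> 0 < Y s + 1) by (intros s Hs; specialize (Hpos s Hs); lra).
  assert (Hlog : RInt (fun _ => 0) 0 t + (ln (Y t + 1) - ln (Y 0 + 1)) <= RInt k 0 t).
  { apply (RInt_dissipation_le (fun s => ln (Y s + 1)) (fun s => dY s / (Y s + 1))).
    - lra.
    - intros s Hs. assert (Hs' : 0 <= s <= T) by lra. specialize (Hp s Hs').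
      auto_derive.
      + split; [eexists; apply Hd; auto | lra].
      + replace (Derive (fun x => Y x) s) with (dY s) by (symmetry; apply is_derive_unique, Hd; auto).
        field. lra.
    - intros s Hs. assert (Hs' : 0 <= s <= T) by lra.
      apply continuity_pt_filterlim, continuity_pt_div.
      + apply continuity_pt_filterlim, Hc, Hs'.
      + apply continuity_pt_filterlim, (continuous_plus Y (fun _ => 1)).
        * apply ex_derive_continuousR. eexists; apply Hd, Hs'.
        * apply continuous_const.
      + specialize (Hp s Hs'). lra.
    - apply ex_RInt_constR.
    - apply ex_RInt_continuousR; [lra|]. intros; apply Hk; lra.
    - intros s Hs. assert (Hs' : 0 <= s <= T) by lra. specialize (Hp s Hs').
      apply Rmult_le_reg_r with (Y s + 1); auto.
      replace ((0 + dY s / (Y s + 1)) * (Y s + 1)) with (dY s) by (field; lra). auto. }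
  rewrite RInt_constR in Hlog.
  rewrite <- (exp_ln (Y t + 1)) by (apply Hp; auto).
  rewrite <- (exp_ln (Y 0 + 1)) by (apply Hp; lra).
  rewrite <- exp_plus.
  destruct (Rle_lt_or_eq (ln (Y t + 1)) (ln (Y 0 + 1) + RInt k 0 t) ltac:(lra)) as [E | ->].
  - left; apply exp_increasing, E.
  - apply Rle_refl.
Qed.

Lemma RInt_param_continuous (G : R -> R -> R) t0 :
  (exists d, 0 < d /\ forall s y, Rabs (s - t0) < d -> 0 <= y <= 1 -> continuity_2d_pt G s y) ->
  continuous (fun s => RInt (fun y => G s y) 0 1) t0.
Proof.
  intros [d [Hd H]].
  assert (H0 : forall y, 0 <= y <= 1 -> continuity_2d_pt G t0 y).
  { intros y Hy. apply H; auto. rewrite Rminus_eq_0, Rabs_R0; lra. }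
  apply continuous_of_eps_delta. intros eps He.
  destruct (continuity_2d_pt_unif_slice G 0 1 t0 H0 (eps / 2)) as [d' [Hd' H']]; [lra|].
  exists (Rmin d d'); split; [apply Rmin_glb_lt; auto|].
  intros s Hs.
  assert (Hs1 : Rabs (s - t0) < d) by (eapply Rlt_le_trans; [exact Hs | apply Rmin_l]).
  assert (Hs2 : Rabs (s - t0) < d') by (eapply Rlt_le_trans; [exact Hs | apply Rmin_r]).
  assert (E1 : ex_RInt (fun y => G s y) 0 1) by (apply ex_RInt_slice; [lra | auto]).
  assert (E2 : ex_RInt (fun y => G t0 y) 0 1) by (apply ex_RInt_slice; [lra | auto]).
  rewrite <- RInt_minusR by auto.
  apply Rle_lt_trans with ((1 - 0) * (eps / 2)); [|lra].
  apply abs_RInt_le_const; [lra | apply ex_RInt_minusR; auto |].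
  intros y Hy. left. apply H'; auto.
Qed.

(** [dF] must agree with the partial derivative on a neighbourhood of each
    point of [[0, 1]], hence the hypotheses on [(-1, 2)]. *)
Lemma RInt_param_derive (F dF : R -> R -> R) t0 d : 0 < d ->
  (forall s y, Rabs (s - t0) < d -> -1 < y < 2 -> is_derive (fun z => F z y) s (dF s y)) ->
  (forall s y, Rabs (s - t0) < d -> -1 < y < 2 ->
     continuity_2d_pt F s y /\ continuity_2d_pt dF s y) ->
  is_derive (fun s => RInt (fun y => F s y) 0 1) t0 (RInt (fun y => dF t0 y) 0 1).
Proof.
  intros Hd HD HC.
  assert (Ht0 : Rabs (t0 - t0) < d) by (rewrite Rminus_eq_0, Rabs_R0; lra).
  replace (RInt (fun y => dF t0 y) 0 1) with (RInt (fun y => Derive (fun z => F z y) t0) 0 1).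
  2:{ apply RInt_extR; [lra|]. intros y Hy. apply is_derive_unique, HD; auto; lra. }
  apply (is_derive_RInt_param F 0 1 t0).
  - exists (mkposreal d Hd). intros s Hs y Hy. rewrite Rmin_left, Rmax_right in Hy by lra.
    eexists. apply HD; [exact Hs | lra].
  - intros y Hy. rewrite Rmin_left, Rmax_right in Hy by lra.
    apply continuity_2d_pt_ext_loc with (f := dF).
    + exists (mkposreal (Rmin d 1) (Rmin_glb_lt _ _ _ Hd Rlt_0_1)). simpl.
      intros s z Hs Hz. symmetry. apply is_derive_unique, HD.
      * eapply Rlt_le_trans; [exact Hs | apply Rmin_l].
      * assert (Rabs (z - y) < 1) by (eapply Rlt_le_trans; [exact Hz | apply Rmin_r]).
        apply Rabs_def2 in H. lra.
    + apply HC; auto; lra.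
  - exists (mkposreal d Hd). intros s Hs. apply ex_RInt_slice; [lra|].
    intros y Hy. apply HC; auto; lra.
Qed.

Lemma RInt_Cauchy_Schwarz (g : R -> R) a b : a <= b ->
  ex_RInt g a b -> ex_RInt (fun y => g y ^ 2) a b ->
  (RInt g a b) ^ 2 <= (b - a) * RInt (fun y => g y ^ 2) a b.
Proof.
  intros Hab Hg Hg2.
  set (m := RInt g a b). set (L := b - a). set (I2 := RInt (fun y => g y ^ 2) a b).
  set (q := fun y => (L * L) * g y ^ 2 + ((- (2 * L * m)) * g y + m ^ 2)).
  assert (Eq : ex_RInt q a b) by (unfold q; auto using ex_RInt_plusR, ex_RInt_scalR, ex_RInt_constR).
  (* [L (L I2 - m^2)] is the integral of the square [(L g - m)^2]. *)
  assert (P : 0 <= L * (L * I2 - m ^ 2)).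
  { replace (L * (L * I2 - m ^ 2)) with (RInt q a b).
    - apply RInt_ge0; auto. intros y _. unfold q.
      replace (L * L * g y ^ 2 + (- (2 * L * m) * g y + m ^ 2)) with ((L * g y - m) ^ 2) by ring.
      apply pow2_ge_0.
    - unfold q. rewrite !RInt_plusR, !RInt_scalR, RInt_constR
        by auto using ex_RInt_plusR, ex_RInt_scalR, ex_RInt_constR.
      fold m I2 L. ring_R. }
  destruct (Req_dec L 0) as [HL | HL].
  - assert (a = b) by (unfold L in HL; lra). subst b.
    unfold m. rewrite RInt_point. unfold zero; simpl. fold L; rewrite HL. lra.
  - assert (0 < L) by (unfold L in *; lra).
    apply Rmult_le_reg_l with L; auto. nra.
Qed.

Lemma RInt_le_subinterval (h : R -> R) a b c d : a <= c <= d -> d <= b ->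
  (forall y, a <= y <= b -> continuous h y) -> (forall y, a <= y <= b -> 0 <= h y) ->
  RInt h c d <= RInt h a b.
Proof.
  intros Hc Hd Hcont Hp.
  assert (Ex : forall x y, a <= x <= y -> y <= b -> ex_RInt h x y).
  { intros x y Hx Hy. apply ex_RInt_continuousR; [lra|]. intros; apply Hcont; lra. }
  rewrite <- (RInt_Chasles h a d b), <- (RInt_Chasles h a c d) by (apply Ex; lra).
  unfold plus; simpl.
  assert (0 <= RInt h a c) by (apply RInt_ge0; [lra | apply Ex; lra | intros; apply Hp; lra]).
  assert (0 <= RInt h d b) by (apply RInt_ge0; [lra | apply Ex; lra | intros; apply Hp; lra]).
  lra.
Qed.

Section Sobolev.
Variables f f' : R -> R.
Hypothesis f_derive : forall y, 0 <= y <= 1 -> is_derive f y (f' y).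
Hypothesis f'_continuous : forall y, 0 <= y <= 1 -> continuous f' y.

Let ex_RInt_f'2 a b : 0 <= a <= b -> b <= 1 -> ex_RInt (fun z => f' z ^ 2) a b.
Proof. intros Ha Hb. apply ex_RInt_continuousR; [lra|]. intros; apply continuous_sq, f'_continuous; lra. Qed.

Lemma sq_sub_le_RInt_derive_sq x y : 0 <= y <= x -> x <= 1 ->
  (f x - f y) ^ 2 <= RInt (fun z => f' z ^ 2) 0 1.
Proof.
  intros Hy Hx.
  rewrite <- (RInt_is_derive f f' y x) by (lra || intros; apply f_derive || apply f'_continuous; lra).
  apply Rle_trans with ((x - y) * RInt (fun z => f' z ^ 2) y x).
  { apply RInt_Cauchy_Schwarz; [lra | | apply ex_RInt_f'2; lra].
    apply ex_RInt_continuousR; [lra|]. intros; apply f'_continuous; lra. }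
  assert (0 <= RInt (fun z => f' z ^ 2) y x)
    by (apply RInt_ge0; [lra | apply ex_RInt_f'2; lra | intros; apply pow2_ge_0]).
  assert (RInt (fun z => f' z ^ 2) y x <= RInt (fun z => f' z ^ 2) 0 1).
  { apply RInt_le_subinterval; try lra.
    - intros; apply continuous_sq, f'_continuous; lra.
    - intros; apply pow2_ge_0. }
  nra.
Qed.

Lemma sq_le_H1_norm x : 0 <= x <= 1 ->
  f x ^ 2 <= 2 * RInt (fun y => f y ^ 2) 0 1 + 2 * RInt (fun y => f' y ^ 2) 0 1.
Proof.
  intros Hx. set (D := RInt (fun z => f' z ^ 2) 0 1).
  assert (Ef : ex_RInt (fun y => f y ^ 2) 0 1).
  { apply ex_RInt_continuousR; [lra|]. intros y Hy.
    apply continuous_sq, ex_derive_continuousR. eexists; apply f_derive, Hy. }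
  replace (2 * RInt (fun y => f y ^ 2) 0 1 + 2 * D) with (2 * RInt (fun y => f y ^ 2) 0 1 + 2 * D * (1 - 0)) by ring.
  replace (f x ^ 2) with (RInt (fun _ => f x ^ 2) 0 1) by (rewrite RInt_constR; ring_R).
  apply RInt_le_affine; [lra | apply ex_RInt_constR | auto |].
  intros y Hy. assert (B : (f x - f y) ^ 2 <= D).
  { destruct (Rle_dec y x).
    - apply sq_sub_le_RInt_derive_sq; lra.
    - replace ((f x - f y) ^ 2) with ((f y - f x) ^ 2) by ring.
      apply sq_sub_le_RInt_derive_sq; lra. }
  pose proof (pow2_ge_0 (f y - (f x - f y))). nra.
Qed.

End Sobolev.

Lemma Linf_norm_spec (g : R -> R) M : (forall x, 0 <= x <= 1 -> Rabs (g x) <= M) ->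
  (forall x, 0 <= x <= 1 -> Rabs (g x) <= Linf_norm g) /\
  (forall B, (forall x, 0 <= x <= 1 -> Rabs (g x) <= B) -> Linf_norm g <= B).
Proof.
  intros HM. unfold Linf_norm.
  set (E := fun y => exists x, 0 <= x <= 1 /\ y = Rabs (g x)).
  destruct (Lub_Rbar_correct E) as [Hub Hlub].
  assert (HubM : is_ub_Rbar E M) by (intros y [x [Hx ->]]; simpl; apply HM; auto).
  pose proof (Hlub M HubM) as HleM.
  pose proof (Hub (Rabs (g 0)) ltac:(exists 0; split; [lra | auto])) as Hge.
  destruct (Lub_Rbar E) as [L | |]; simpl in *; try contradiction.
  split.
  - intros x Hx. apply (Hub (Rabs (g x))). exists x; auto.
  - intros B HB. apply (Hlub B). intros y [x [Hx ->]]; simpl; apply HB; auto.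
Qed.

Lemma Linf_norm_sq_le (g : R -> R) B : 0 <= B ->
  (forall x, 0 <= x <= 1 -> g x ^ 2 <= B) -> Linf_norm g ^ 2 <= B.
Proof.
  intros HB H.
  assert (Hx : forall x, 0 <= x <= 1 -> Rabs (g x) <= sqrt B).
  { intros x Hx. rewrite <- sqrt_Rsqr_abs. apply sqrt_le_1_alt.
    unfold Rsqr. specialize (H x Hx). simpl in H. lra. }
  destruct (Linf_norm_spec g (sqrt B) Hx) as [H1 H2].
  pose proof (H2 _ Hx). pose proof (H1 0 ltac:(lra)). pose proof (Rabs_pos (g 0)).
  rewrite <- (sqrt_sqrt B HB). simpl. rewrite Rmult_1_r. apply Rmult_le_compat; lra.
Qed.

Lemma Linf_norm_dist (g h : R -> R) M e : (forall x, 0 <= x <= 1 -> Rabs (g x) <= M) ->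
  (forall x, 0 <= x <= 1 -> Rabs (h x - g x) <= e) -> Rabs (Linf_norm h - Linf_norm g) <= e.
Proof.
  intros HM He.
  assert (Hh : forall x, 0 <= x <= 1 -> Rabs (h x) <= M + e).
  { intros x Hx. specialize (HM x Hx); specialize (He x Hx).
    pose proof (Rabs_triang (h x - g x) (g x)). replace (h x - g x + g x) with (h x) in H by ring. lra. }
  destruct (Linf_norm_spec g M HM) as [G1 G2].
  destruct (Linf_norm_spec h (M + e) Hh) as [H1 H2].
  apply Rabs_le; split.
  - cut (Linf_norm g <= Linf_norm h + e); [lra|].
    apply G2. intros x Hx. specialize (H1 x Hx); specialize (He x Hx).
    pose proof (Rabs_triang (g x - h x) (h x)). replace (g x - h x + h x) with (g x) in H by ring.
    rewrite Rabs_minus_sym in He. lra.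
  - cut (Linf_norm h <= Linf_norm g + e); [lra|].
    apply H2. intros x Hx. specialize (G1 x Hx); specialize (He x Hx).
    pose proof (Rabs_triang (h x - g x) (g x)). replace (h x - g x + g x) with (h x) in H by ring. lra.
Qed.

Lemma Linf_norm_continuous (g : R -> R -> R) t0 :
  (forall s y, continuity_2d_pt g s y) -> continuous (fun s => Linf_norm (g s)) t0.
Proof.
  intros Hc.
  destruct (continuity_ab_maj (fun y => Rabs (g t0 y)) 0 1 ltac:(lra)) as [xm [Hxm _]].
  { intros y Hy. apply (continuity_pt_comp (fun y => g t0 y) Rabs).
    - apply continuity_pt_filterlim, continuous_slice, Hc.
    - apply Rcontinuity_abs. }
  apply continuous_of_eps_delta. intros eps He.
  destruct (continuity_2d_pt_unif_slice g 0 1 t0 (fun y _ => Hc t0 y) (eps / 2)) as [d [Hd H]]; [lra|].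
  exists d; split; auto. intros s Hs.
  apply Rle_lt_trans with (eps / 2); [|lra].
  apply (Linf_norm_dist (g t0) (g s) (Rabs (g t0 xm))); auto.
  intros x Hx. left. apply H; auto.
Qed.

Lemma sq_plus_le a b : (a + b) ^ 2 <= 2 * a ^ 2 + 2 * b ^ 2.
Proof. pose proof (pow2_ge_0 (a - b)). nra. Qed.

Lemma mix_bounds a b z : 0 <= z <= 1 -> Rmin a b <= mix a b z <= Rmax a b.
Proof.
  intros Hz. unfold mix. pose proof (Rmin_l a b). pose proof (Rmin_r a b).
  pose proof (Rmax_l a b). pose proof (Rmax_r a b). split; nra.
Qed.

Lemma neg_cubic_le (b B a w S : R) : 0 < b <= B -> a ^ 2 <= S ->
  - (b * a ^ 2 * w) <= B * sqrt S * ((a ^ 2 + w ^ 2) / 2).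
Proof.
  intros Hb Ha.
  assert (Habs : Rabs a <= sqrt S).
  { rewrite <- sqrt_Rsqr_abs. apply sqrt_le_1_alt. unfold Rsqr. simpl in Ha. lra. }
  assert (Hw : Rabs a * Rabs w <= (a ^ 2 + w ^ 2) / 2).
  { pose proof (pow2_ge_0 (Rabs a - Rabs w)). rewrite <- (pow2_abs a), <- (pow2_abs w). nra. }
  assert (Hneg : - w <= Rabs w) by (rewrite <- Rabs_Ropp; apply Rle_abs).
  pose proof (Rabs_pos a). pose proof (Rabs_pos w).
  assert (H1 : - (b * a ^ 2 * w) <= b * (Rabs a * (Rabs a * Rabs w))).
  { replace (Rabs a * (Rabs a * Rabs w)) with (a ^ 2 * Rabs w) by (rewrite <- (pow2_abs a); ring).
    replace (- (b * a ^ 2 * w)) with (b * (a ^ 2 * - w)) by ring.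
    pose proof (pow2_ge_0 a). apply Rmult_le_compat_l; [lra|]. apply Rmult_le_compat_l; lra. }
  assert (H2 : Rabs a * (Rabs a * Rabs w) <= sqrt S * ((a ^ 2 + w ^ 2) / 2))
    by (apply Rmult_le_compat; try apply Rmult_le_pos; lra).
  assert (0 <= Rabs a * (Rabs a * Rabs w)) by (repeat apply Rmult_le_pos; lra).
  replace (B * sqrt S * ((a ^ 2 + w ^ 2) / 2)) with (B * (sqrt S * ((a ^ 2 + w ^ 2) / 2))) by ring.
  apply Rle_trans with (1 := H1). apply Rmult_le_compat; lra.
Qed.

Lemma sqrt_mul_le (S X k : R) : 0 <= S -> 0 < k -> sqrt S * X <= S / (4 * k) + k * X ^ 2.
Proof.
  intros HS Hk. pose proof (sqrt_sqrt S HS). pose proof (pow2_ge_0 (sqrt S - 2 * k * X)).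
  apply Rmult_le_reg_l with (4 * k); [lra|].
  replace (4 * k * (S / (4 * k) + k * X ^ 2)) with (S + 4 * k ^ 2 * X ^ 2) by (field; lra).
  nra.
Qed.

(** Young's inequality absorbs half of the dissipation [G / R] into the
    cubic term, whose remainder is quadratic in [W = V + Z]. *)
Lemma absorb_cubic_growth (Yd V Z Y G R B a b : R) :
  0 < R -> 0 <= B -> 0 <= V -> 0 <= Z -> 0 <= Y -> 0 <= G ->
  V + Z <= a * (Z + 1) -> V + Z <= b * (Y + 1) ->
  Yd <= - 2 * (G / R) + B * sqrt (2 * V + 2 * G) / 2 * (V + Z) ->
  Yd <= - (G / R) + (a / (2 * R) + R * B ^ 2 * a * b / 4) * ((Z + 1) * (Y + 1)).
Proof.
  intros HR HB HV HZ HY HG HWZ HWY Hrate.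
  set (W := V + Z) in *. set (P := (Z + 1) * (Y + 1)).
  assert (Young : sqrt (2 * V + 2 * G) * (B * W / 2)
                  <= V / (2 * R) + G / R / 2 + R * (B * W / 2) ^ 2).
  { replace (V / (2 * R) + G / R / 2) with ((2 * V + 2 * G) / (4 * R)) by (field; lra).
    apply sqrt_mul_le; lra. }
  assert (HP : Z + 1 <= P) by (unfold P; nra).
  assert (HVP : V / (2 * R) <= a / (2 * R) * P).
  { unfold Rdiv. rewrite Rmult_assoc, (Rmult_comm (/ (2 * R))), <- Rmult_assoc.
    apply Rmult_le_compat_r; [left; apply Rinv_0_lt_compat; lra | unfold W in HWZ; nra]. }
  assert (HW2 : W ^ 2 <= a * b * P).
  { replace (W ^ 2) with (W * W) by ring.
    replace (a * b * P) with ((a * (Z + 1)) * (b * (Y + 1))) by (unfold P; ring).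
    apply Rmult_le_compat; unfold W in *; lra. }
  assert (HB2 : R * (B * W / 2) ^ 2 <= R * B ^ 2 * a * b / 4 * P).
  { replace (R * (B * W / 2) ^ 2) with (R * B ^ 2 / 4 * W ^ 2) by field.
    replace (R * B ^ 2 * a * b / 4 * P) with (R * B ^ 2 / 4 * (a * b * P)) by field.
    apply Rmult_le_compat_l; [pose proof (pow2_ge_0 B); apply Rmult_le_pos; [nra | lra] | auto]. }
  replace (B * sqrt (2 * V + 2 * G) / 2 * W) with (sqrt (2 * V + 2 * G) * (B * W / 2))
    in Hrate by field.
  assert (0 <= G / R) by (apply Rdiv_le_0_compat; lra).
  fold P. lra.
Qed.


Lemma Dw_app (w w' : list bool) f : Dw (w ++ w') f = Dw w (Dw w' f).
Proof. induction w as [|b w IH]; simpl; auto. rewrite IH; auto. Qed.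

Lemma smooth_pDx f : smooth f -> smooth (pDx f).
Proof. intros H w. change (pDx f) with (Dw (false :: nil) f). rewrite <- Dw_app. apply H. Qed.

Lemma smooth_pDt f : smooth f -> smooth (pDt f).
Proof. intros H w. change (pDt f) with (Dw (true :: nil) f). rewrite <- Dw_app. apply H. Qed.

Lemma smooth_ex_derive_x F : smooth F -> forall t x, ex_derive (fun y => F t y) x.
Proof. intros H t x. exact (proj2 (proj1 (H nil) t x)). Qed.

Lemma smooth_ex_derive_t F : smooth F -> forall t x, ex_derive (fun s => F s x) t.
Proof. intros H t x. exact (proj1 (proj1 (H nil) t x)). Qed.

Lemma smooth_continuity_2d F : smooth F -> forall t x, continuity_2d_pt F t x.
Proof. intros H t x. apply continuity_2d_pt_filterlim. exact (proj2 (H nil) t x). Qed.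

Lemma periodic1_pDx f : smooth f -> periodic1 f -> periodic1 (pDx f).
Proof.
  intros Hs Hp t x. unfold pDx.
  assert (E : is_derive (fun y => f t (y + 1)) x (Derive (fun y => f t y) (x + 1))).
  { replace (Derive (fun y => f t y) (x + 1)) with (1 * Derive (fun y => f t y) (x + 1)) by ring.
    apply (is_derive_comp (fun y => f t y) (fun y => y + 1)).
    - apply Derive_correct, smooth_ex_derive_x, Hs.
    - auto_derive; auto. }
  rewrite <- (is_derive_unique _ _ _ E). apply Derive_ext. intros y; apply Hp.
Qed.

Lemma periodic1_pDt f : periodic1 f -> periodic1 (pDt f).
Proof. intros Hp t x. unfold pDt. apply Derive_ext. intros s; apply Hp. Qed.

Ltac smooth_tac := lazymatch goal with
  | |- smooth (pDx ?f) => apply smooth_pDx; smooth_tac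
  | |- smooth (pDt ?f) => apply smooth_pDt; smooth_tac
  | |- smooth ?f => assumption
  end.

Ltac ex_derive_tac :=
  repeat split;
  try lazymatch goal with
      | |- ex_derive (fun _ => ?F ?t _) _ => apply (smooth_ex_derive_x F); smooth_tac
      | |- ex_derive (fun _ => ?F _ ?x) _ => apply (smooth_ex_derive_t F); smooth_tac
      end;
  try (intro; lra).

Ltac continuity_2d_step :=
  first
    [ apply continuity_2d_pt_const | apply continuity_2d_pt_plus | apply continuity_2d_pt_minus
    | apply continuity_2d_pt_mult | apply continuity_2d_pt_opp | apply continuity_2d_pt_div
    | apply continuity_2d_pt_pow2 | apply continuity_2d_pt_inv
    | apply smooth_continuity_2d; smooth_tac ].

Ltac continuity_2d_tac := repeat continuity_2d_step.

Section NS_estimates.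
Variables mu_p mu_m gam_p gam_m cv_p cv_m T rho_lo rho_hi th_lo th_hi : R.
Hypothesis mu_p_pos : 0 < mu_p.
Hypothesis mu_m_pos : 0 < mu_m.
Hypothesis gam_p_gt1 : 1 < gam_p.
Hypothesis gam_m_gt1 : 1 < gam_m.
Hypothesis cv_p_pos : 0 < cv_p.
Hypothesis cv_m_pos : 0 < cv_m.
Hypothesis T_pos : 0 < T.
Hypothesis rho_lo_pos : 0 < rho_lo.
Hypothesis rho_hi_pos : 0 < rho_hi.
Hypothesis th_lo_pos : 0 < th_lo.
Hypothesis th_hi_pos : 0 < th_hi.
Variables c rho theta u : field.
Hypothesis c_smooth : smooth c.
Hypothesis rho_smooth : smooth rho.
Hypothesis theta_smooth : smooth theta.
Hypothesis u_smooth : smooth u.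
Hypothesis c_periodic : periodic1 c.
Hypothesis rho_periodic : periodic1 rho.
Hypothesis theta_periodic : periodic1 theta.
Hypothesis u_periodic : periodic1 u.
Hypothesis NS : NS_system mu_p mu_m gam_p gam_m cv_p cv_m T c rho theta u.
Hypothesis c_bounds : forall t x, 0 <= t <= T -> 0 <= c t x <= 1.
Hypothesis rho_bounds : forall t x, 0 <= t <= T -> rho_lo <= rho t x <= rho_hi.
Hypothesis theta_bounds : forall t x, 0 <= t <= T -> th_lo <= theta t x <= th_hi.

Definition mu s y := muc mu_p mu_m (c s y).
Definition gam s y := gamc gam_p gam_m (c s y).
Definition cv s y := cvc cv_p cv_m (c s y).
Definition pressure s y := (gam s y - 1) * rho s y * theta s y.
Definition sigma s y := sigmaNS mu_p mu_m gam_p gam_m c rho theta u s y.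
Definition energy s y := energyNS cv_p cv_m c theta u s y.
(** Definitions suffixed [_x] or [_t] are closed forms of partial derivatives,
    checked against [pDx] and [pDt] with [auto_derive] where they are used. *)
Definition sigma_x s y := (mu_p - mu_m) * pDx c s y * pDx u s y + mu s y * pDx (pDx u) s y
  - ((gam_p - gam_m) * pDx c s y * rho s y * theta s y
     + (gam s y - 1) * (pDx rho s y * theta s y + rho s y * pDx theta s y)).

Ltac unfold_fields :=
  unfold sigma_x, sigma, energy, mu, gam, cv, sigmaNS, energyNS, pres, muc, gamc, cvc, mix in *.

Ltac expand_derivative :=
  first [unfold pDx at 1 | unfold pDt at 1]; apply is_derive_unique; unfold_fields;
  auto_derive; ex_derive_tac; unfold pDx, pDt; field.

Lemma pDx_rho_u t x : pDx (fun s y => rho s y * u s y) t x = pDx rho t x * u t x + rho t x * pDx u t x.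
Proof. expand_derivative. Qed.

Lemma pDt_rho_c t x : pDt (fun s y => rho s y * c s y) t x = pDt rho t x * c t x + rho t x * pDt c t x.
Proof. expand_derivative. Qed.

Lemma pDx_rho_c_u t x : pDx (fun s y => rho s y * c s y * u s y) t x =
  pDx rho t x * c t x * u t x + rho t x * pDx c t x * u t x + rho t x * c t x * pDx u t x.
Proof. expand_derivative. Qed.

Lemma pDt_rho_u t x : pDt (fun s y => rho s y * u s y) t x = pDt rho t x * u t x + rho t x * pDt u t x.
Proof. expand_derivative. Qed.

Lemma pDx_rho_u2 t x : pDx (fun s y => rho s y * u s y ^ 2) t x =
  pDx rho t x * u t x ^ 2 + 2 * rho t x * u t x * pDx u t x.
Proof. expand_derivative. Qed.

Lemma pDx_sigma t x : pDx (sigmaNS mu_p mu_m gam_p gam_m c rho theta u) t x = sigma_x t x.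
Proof. expand_derivative. Qed.

Lemma pDt_rho_energy t x : pDt (fun s y => rho s y * energyNS cv_p cv_m c theta u s y) t x =
  pDt rho t x * energy t x + rho t x * (u t x * pDt u t x + (cv_p - cv_m) * pDt c t x * theta t x
    + cv t x * pDt theta t x).
Proof. expand_derivative. Qed.

Lemma pDx_rho_energy_u t x : pDx (fun s y => rho s y * energyNS cv_p cv_m c theta u s y * u s y) t x =
  pDx rho t x * energy t x * u t x + rho t x * (u t x * pDx u t x + (cv_p - cv_m) * pDx c t x * theta t x
    + cv t x * pDx theta t x) * u t x + rho t x * energy t x * pDx u t x.
Proof. expand_derivative. Qed.

Lemma pDx_sigma_u t x : pDx (fun s y => sigmaNS mu_p mu_m gam_p gam_m c rho theta u s y * u s y) t x =
  sigma_x t x * u t x + sigma t x * pDx u t x.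
Proof. expand_derivative. Qed.

Definition mu_min := Rmin mu_p mu_m.
Definition mu_max := Rmax mu_p mu_m.
Definition gam_min := Rmin gam_p gam_m.
Definition gam_max := Rmax gam_p gam_m.
Definition cv_min := Rmin cv_p cv_m.
Definition cv_max := Rmax cv_p cv_m.
Definition p_max := (gam_max - 1) * rho_hi * th_hi.

Lemma mu_min_pos : 0 < mu_min.
Proof. unfold mu_min, Rmin; destruct Rle_dec; lra. Qed.
Lemma gam_min_gt1 : 1 < gam_min.
Proof. unfold gam_min, Rmin; destruct Rle_dec; lra. Qed.
Lemma cv_min_pos : 0 < cv_min.
Proof. unfold cv_min, Rmin; destruct Rle_dec; lra. Qed.

Lemma mu_bounds t x : 0 <= t <= T -> mu_min <= mu t x <= mu_max.
Proof. intros Ht. apply mix_bounds, c_bounds, Ht. Qed.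
Lemma gam_bounds t x : 0 <= t <= T -> gam_min <= gam t x <= gam_max.
Proof. intros Ht. apply mix_bounds, c_bounds, Ht. Qed.
Lemma cv_bounds t x : 0 <= t <= T -> cv_min <= cv t x <= cv_max.
Proof. intros Ht. apply mix_bounds, c_bounds, Ht. Qed.

Lemma pressure_bounds t x : 0 <= t <= T -> 0 <= pressure t x <= p_max.
Proof.
  intros Ht. unfold pressure, p_max. pose proof (gam_bounds t x Ht). pose proof (rho_bounds t x Ht).
  pose proof (theta_bounds t x Ht). pose proof gam_min_gt1. split.
  - repeat apply Rmult_le_pos; lra.
  - apply Rmult_le_compat; [apply Rmult_le_pos; lra | lra | | lra].
    apply Rmult_le_compat; lra.
Qed.

Lemma mu_max_pos : 0 < mu_max.
Proof. unfold mu_max, Rmax; destruct Rle_dec; lra. Qed.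
Lemma gam_max_gt1 : 1 < gam_max.
Proof. unfold gam_max, Rmax; destruct Rle_dec; lra. Qed.

Lemma p_max_nonneg : 0 <= p_max.
Proof. pose proof gam_max_gt1. unfold p_max. repeat apply Rmult_le_pos; lra. Qed.

Lemma sigma_eq s y : sigma s y = mu s y * pDx u s y - pressure s y.
Proof. reflexivity. Qed.

(** The non-conservative form of (NS), obtained by subtracting multiples of
    the mass equation from the other three. *)
Lemma NS_nonconservative t x : 0 <= t <= T ->
  pDt rho t x = - pDx rho t x * u t x - rho t x * pDx u t x /\
  pDt c t x = - u t x * pDx c t x /\
  pDt u t x = sigma_x t x / rho t x - u t x * pDx u t x /\
  pDt theta t x = sigma t x * pDx u t x / (rho t x * cv t x) - u t x * pDx theta t x.
Proof.
  intros Ht. destruct (NS t x Ht) as [E1 [E2 [E3 E4]]].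
  rewrite pDx_rho_u in E1. rewrite pDt_rho_c, pDx_rho_c_u in E2.
  rewrite pDt_rho_u, pDx_rho_u2, pDx_sigma in E3.
  rewrite pDt_rho_energy, pDx_rho_energy_u, pDx_sigma_u in E4.
  pose proof (rho_bounds t x Ht) as Hr. pose proof (cv_bounds t x Ht) as Hcv. pose proof cv_min_pos.
  assert (Rr : rho t x <> 0) by lra. assert (Rc : cv t x <> 0) by lra.
  set (r := rho t x) in *. set (rx := pDx rho t x) in *. set (rt := pDt rho t x) in *.
  set (cc := c t x) in *. set (cx := pDx c t x) in *. set (ct := pDt c t x) in *.
  set (v := u t x) in *. set (vx := pDx u t x) in *. set (vt := pDt u t x) in *.
  set (th := theta t x) in *. set (thx := pDx theta t x) in *. set (tht := pDt theta t x) in *.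
  set (e := energy t x) in *. set (sx := sigma_x t x) in *. set (s := sigma t x) in *.
  set (k := cv t x) in *.
  assert (D1 : rt = - rx * v - r * vx) by lra.
  assert (D2 : ct = - v * cx).
  { apply Rmult_eq_reg_l with r; auto.
    transitivity ((rt * cc + r * ct + (rx * cc * v + r * cx * v + r * cc * vx))
                  - cc * (rt + (rx * v + r * vx)) - r * v * cx); [ring|].
    rewrite E2, E1. ring. }
  assert (D3 : vt = sx / r - v * vx).
  { apply Rmult_eq_reg_l with r; auto.
    transitivity (rt * v + r * vt + (rx * v ^ 2 + 2 * r * v * vx)
                  - v * (rt + (rx * v + r * vx)) - r * v * vx); [ring|].
    rewrite E3, E1. field. auto. }
  assert (D4 : tht = s * vx / (r * k) - v * thx).
  { apply Rmult_eq_reg_l with (r * k); [|apply Rmult_integral_contrapositive; auto].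
    transitivity
      ((rt * e + r * (v * vt + (cv_p - cv_m) * ct * th + k * tht) +
        (rx * e * v + r * (v * vx + (cv_p - cv_m) * cx * th + k * thx) * v + r * e * vx))
       - e * (rt + (rx * v + r * vx)) - v * r * (vt + v * vx)
       - r * (cv_p - cv_m) * th * (ct + v * cx) - r * k * v * thx); [ring|].
    rewrite E4, E1, D3, D2. field. auto. }
  auto.
Qed.

Lemma continuity_2d_pt_mu s y : continuity_2d_pt mu s y.
Proof. unfold mu, muc, mix. continuity_2d_tac. Qed.

Lemma continuity_2d_pt_sigma s y : continuity_2d_pt sigma s y.
Proof. unfold sigma, sigmaNS, pres, muc, gamc, mix. continuity_2d_tac. Qed.

Lemma continuity_2d_pt_sigma_x s y : continuity_2d_pt sigma_x s y.
Proof. unfold sigma_x, mu, gam, muc, gamc, mix. continuity_2d_tac. Qed.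

Lemma ex_RInt_torus (G : R -> R -> R) t :
  (forall y, continuity_2d_pt G t y) -> ex_RInt (fun y => G t y) 0 1.
Proof. intros H. apply ex_RInt_slice; [lra | auto]. Qed.

Lemma RInt_torus_continuous (G : R -> R -> R) t0 :
  (forall s y, continuity_2d_pt G s y) -> continuous (fun s => RInt (fun y => G s y) 0 1) t0.
Proof. intros H. apply RInt_param_continuous. exists 1; split; [lra | auto]. Qed.

Lemma periodic_at_1 t : u t 1 = u t 0 /\ pDx u t 1 = pDx u t 0 /\ pDt u t 1 = pDt u t 0 /\
  c t 1 = c t 0 /\ rho t 1 = rho t 0 /\ theta t 1 = theta t 0.
Proof.
  replace 1 with (0 + 1) by ring. repeat split.
  - apply u_periodic.
  - apply periodic1_pDx; auto.
  - apply periodic1_pDt; auto.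
  - apply c_periodic.
  - apply rho_periodic.
  - apply theta_periodic.
Qed.

Lemma sigma_periodic t : sigma t 1 = sigma t 0.
Proof.
  destruct (periodic_at_1 t) as [_ [Hux [_ [Hc [Hr Hth]]]]].
  unfold sigma, sigmaNS, pres. rewrite Hux, Hc, Hr, Hth. auto.
Qed.

(** ** The internal energy estimate *)

Definition ux_L2 s := RInt (fun y => pDx u s y ^ 2) 0 1.

Lemma ex_RInt_ux_sq t : ex_RInt (fun y => pDx u t y ^ 2) 0 1.
Proof. apply (ex_RInt_torus (fun s y => pDx u s y ^ 2)). intros; continuity_2d_tac. Qed.

Lemma ux_L2_nonneg t : 0 <= ux_L2 t.
Proof. apply RInt_ge0; [lra | apply ex_RInt_ux_sq | intros; apply pow2_ge_0]. Qed.

Lemma ux_L2_continuous s : continuous ux_L2 s.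
Proof. apply (RInt_torus_continuous (fun s y => pDx u s y ^ 2)). intros; continuity_2d_tac. Qed.

Lemma ex_RInt_ux_L2 a b : a <= b -> ex_RInt ux_L2 a b.
Proof. intros Hab. apply ex_RInt_continuousR; auto. intros; apply ux_L2_continuous. Qed.

Definition eint_density s y := rho s y * cv s y * theta s y.
Definition eint_density_t s y := pDt rho s y * cv s y * theta s y
  + rho s y * (cv_p - cv_m) * pDt c s y * theta s y + rho s y * cv s y * pDt theta s y.
Definition eint_flux s y := rho s y * cv s y * theta s y * u s y.
Definition eint_flux_x s y := pDx rho s y * cv s y * theta s y * u s y
  + rho s y * (cv_p - cv_m) * pDx c s y * theta s y * u s y
  + rho s y * cv s y * pDx theta s y * u s y + rho s y * cv s y * theta s y * pDx u s y.

Definition internal_energy s := RInt (fun y => eint_density s y) 0 1.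
Definition internal_energy_rate s := RInt (fun y => eint_density_t s y) 0 1.

Lemma continuity_2d_pt_eint_density_t s y : continuity_2d_pt eint_density_t s y.
Proof. unfold eint_density_t, cv, cvc, mix. continuity_2d_tac. Qed.

Lemma internal_energy_derive s : is_derive internal_energy s (internal_energy_rate s).
Proof.
  apply (RInt_param_derive eint_density eint_density_t s 1); [lra | |].
  - intros. unfold eint_density, eint_density_t, cv, cvc, mix.
    auto_derive; ex_derive_tac. unfold pDt; field.
  - intros; split; [unfold eint_density, cv, cvc, mix; continuity_2d_tac |
                    apply continuity_2d_pt_eint_density_t].
Qed.

Lemma internal_energy_rate_continuous s : continuous internal_energy_rate s.
Proof. apply RInt_torus_continuous, continuity_2d_pt_eint_density_t. Qed.

(** Along (NS) the internal energy changes only through the flux and the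
    work [σ ∂x u]; the flux integrates to zero over the torus. *)
Lemma internal_energy_rate_eq t : 0 <= t <= T ->
  internal_energy_rate t = RInt (fun y => sigma t y * pDx u t y) 0 1.
Proof.
  intros Ht.
  assert (Ew : ex_RInt (fun y => sigma t y * pDx u t y) 0 1).
  { apply (ex_RInt_torus (fun s y => sigma s y * pDx u s y)). intros.
    apply continuity_2d_pt_mult; [apply continuity_2d_pt_sigma | continuity_2d_tac]. }
  assert (Hc : forall y, continuity_2d_pt eint_flux_x t y)
    by (intros; unfold eint_flux_x, cv, cvc, mix; continuity_2d_tac).
  assert (Hflux : RInt (fun y => eint_flux_x t y) 0 1 = 0).
  { apply (RInt_derive_periodic (fun y => eint_flux t y)).
    - intros. unfold eint_flux, eint_flux_x, cv, cvc, mix.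
      auto_derive; ex_derive_tac. unfold pDx; field.
    - intros; apply continuous_slice, Hc.
    - destruct (periodic_at_1 t) as [Hu [_ [_ [Hc1 [Hr Hth]]]]].
      unfold eint_flux, cv. rewrite Hu, Hc1, Hr, Hth. auto. }
  unfold internal_energy_rate.
  rewrite (RInt_extR _ (fun y => sigma t y * pDx u t y - eint_flux_x t y)); [|lra|].
  - rewrite (RInt_minusR (fun y => sigma t y * pDx u t y) (fun y => eint_flux_x t y)), Hflux
      by (auto; apply ex_RInt_torus, Hc). ring_R.
  - intros y _. destruct (NS_nonconservative t y Ht) as [D1 [D2 [_ D4]]].
    pose proof (rho_bounds t y Ht). pose proof (cv_bounds t y Ht). pose proof cv_min_pos.
    unfold eint_density_t, eint_flux_x. rewrite D1, D2, D4. field. split; lra.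
Qed.

Lemma ux_sq_le_work t y : 0 <= t <= T ->
  pDx u t y ^ 2 <= 2 / mu_min * (sigma t y * pDx u t y) + p_max ^ 2 / mu_min ^ 2.
Proof.
  intros Ht. rewrite sigma_eq.
  pose proof (mu_bounds t y Ht). pose proof mu_min_pos. pose proof (pressure_bounds t y Ht).
  set (m := mu t y) in *. set (p := pressure t y) in *. set (v := pDx u t y) in *.
  assert (Young : p * v <= m * v ^ 2 / 2 + p ^ 2 / (2 * m)).
  { assert (0 <= (m * v - p) ^ 2 / (2 * m)) by (apply Rdiv_le_0_compat; [apply pow2_ge_0 | lra]).
    replace (m * v ^ 2 / 2 + p ^ 2 / (2 * m)) with (p * v + (m * v - p) ^ 2 / (2 * m)) by (field; lra).
    lra. }
  assert (mu_min / 2 * v ^ 2 <= m * v ^ 2 / 2) by (pose proof (pow2_ge_0 v); nra).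
  assert (p ^ 2 / (2 * m) <= p_max ^ 2 / (2 * mu_min)).
  { unfold Rdiv. apply Rmult_le_compat; [pose proof (pow2_ge_0 p); lra | | |].
    - left; apply Rinv_0_lt_compat; lra.
    - apply pow_incr; lra.
    - apply Rinv_le_contravar; lra. }
  apply Rmult_le_reg_l with (mu_min / 2); [lra|].
  replace (mu_min / 2 * (2 / mu_min * ((m * v - p) * v) + p_max ^ 2 / mu_min ^ 2))
    with ((m * v - p) * v + p_max ^ 2 / (2 * mu_min)) by (field; lra).
  nra.
Qed.

Definition internal_energy_max := rho_hi * cv_max * th_hi.
Definition ux_L2L2_bound := 2 / mu_min * internal_energy_max + T * (p_max ^ 2 / mu_min ^ 2).

Lemma internal_energy_bounds t : 0 <= t <= T -> 0 <= internal_energy t <= internal_energy_max.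
Proof.
  intros Ht.
  assert (Hpt : forall y, 0 <= eint_density t y <= internal_energy_max).
  { intros y. unfold eint_density, internal_energy_max.
    pose proof (rho_bounds t y Ht). pose proof (cv_bounds t y Ht). pose proof (theta_bounds t y Ht).
    pose proof cv_min_pos. split.
    - repeat apply Rmult_le_pos; lra.
    - apply Rmult_le_compat; [apply Rmult_le_pos; lra | lra | | lra]. apply Rmult_le_compat; lra. }
  assert (E : ex_RInt (fun y => eint_density t y) 0 1).
  { apply ex_RInt_torus. intros; unfold eint_density, cv, cvc, mix; continuity_2d_tac. }
  unfold internal_energy. split.
  - apply RInt_ge0; auto; [lra | intros; apply Hpt].
  - replace internal_energy_max with (RInt (fun _ => internal_energy_max) 0 1)
      by (rewrite RInt_constR; ring_R).
    apply RInt_leR; auto using ex_RInt_constR; [lra | intros; apply Hpt].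
Qed.

Lemma ux_L2_le_internal_energy_rate t : 0 <= t <= T ->
  ux_L2 t <= 2 / mu_min * internal_energy_rate t + p_max ^ 2 / mu_min ^ 2.
Proof.
  intros Ht. rewrite internal_energy_rate_eq by auto.
  replace (p_max ^ 2 / mu_min ^ 2) with (p_max ^ 2 / mu_min ^ 2 * (1 - 0)) by ring.
  apply RInt_le_affine; [lra | apply ex_RInt_ux_sq | | intros; apply ux_sq_le_work; auto].
  apply (ex_RInt_torus (fun s y => sigma s y * pDx u s y)). intros.
  apply continuity_2d_pt_mult; [apply continuity_2d_pt_sigma | continuity_2d_tac].
Qed.

Lemma RInt_ux_L2_le t : 0 <= t <= T -> RInt ux_L2 0 t <= ux_L2L2_bound.
Proof.
  intros Ht. pose proof mu_min_pos. pose proof (internal_energy_bounds t Ht).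
  pose proof (internal_energy_bounds 0 ltac:(lra)).
  set (P := p_max ^ 2 / mu_min ^ 2).
  assert (HP : 0 <= P) by (apply Rdiv_le_0_compat; [apply pow2_ge_0 | apply pow_lt; lra]).
  assert (Hint : RInt ux_L2 0 t + (- (2 / mu_min) * internal_energy t - - (2 / mu_min) * internal_energy 0)
                 <= RInt (fun _ => P) 0 t).
  { apply (RInt_dissipation_le (fun s => - (2 / mu_min) * internal_energy s)
             (fun s => - (2 / mu_min) * internal_energy_rate s)); [lra | | | | |].
    - intros s _. apply (is_derive_scal internal_energy), internal_energy_derive.
    - intros s _. apply (continuous_scal_r _ internal_energy_rate), internal_energy_rate_continuous.
    - apply ex_RInt_ux_L2; lra.
    - apply ex_RInt_constR.
    - intros s Hs. pose proof (ux_L2_le_internal_energy_rate s ltac:(lra)). unfold P. lra. }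
  rewrite RInt_constR in Hint.
  assert (P * (t - 0) <= T * P) by nra.
  assert (0 < 2 / mu_min) by (apply Rdiv_lt_0_compat; lra).
  assert (2 / mu_min * internal_energy t <= 2 / mu_min * internal_energy_max)
    by (apply Rmult_le_compat_l; lra).
  assert (0 <= 2 / mu_min * internal_energy 0) by (apply Rmult_le_pos; lra).
  unfold ux_L2L2_bound. fold P. lra.
Qed.

(** ** The estimate of the effective viscous flux *)

Definition sigma_t s y := (mu_p - mu_m) * pDt c s y * pDx u s y + mu s y * pDt (pDx u) s y
  - ((gam_p - gam_m) * pDt c s y * rho s y * theta s y
     + (gam s y - 1) * (pDt rho s y * theta s y + rho s y * pDt theta s y)).
Definition sigma_mu_density s y := sigma s y ^ 2 / mu s y.
Definition sigma_mu_density_t s y :=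
  (2 * sigma s y * sigma_t s y * mu s y - sigma s y ^ 2 * ((mu_p - mu_m) * pDt c s y)) / mu s y ^ 2.
Definition sigma_mu_flux s y := u s y * sigma s y ^ 2 / mu s y.
Definition sigma_mu_flux_x s y := (pDx u s y * sigma s y ^ 2 + 2 * u s y * sigma s y * sigma_x s y) / mu s y
  - u s y * sigma s y ^ 2 * ((mu_p - mu_m) * pDx c s y) / mu s y ^ 2.
(** Material acceleration [∂t u + u ∂x u], equal to [∂x σ / ρ] along (NS). *)
Definition accel s y := pDt u s y + u s y * pDx u s y.
Definition accel_x s y := pDx (pDt u) s y + pDx u s y ^ 2 + u s y * pDx (pDx u) s y.
Definition cubic_coef s y := (1 + 2 * ((gam s y - 1) / cv s y)) / mu s y.

Definition sigma_L2 s := RInt (fun y => sigma s y ^ 2) 0 1.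
Definition sigma_x_L2 s := RInt (fun y => sigma_x s y ^ 2) 0 1.
Definition sigma_mu_L2 s := RInt (fun y => sigma_mu_density s y) 0 1.
Definition sigma_mu_L2_rate s := RInt (fun y => sigma_mu_density_t s y) 0 1.

Lemma continuity_2d_pt_sigma_t s y : continuity_2d_pt sigma_t s y.
Proof. unfold sigma_t, mu, gam, muc, gamc, mix. continuity_2d_tac. Qed.

Ltac ns_continuity :=
  repeat first
    [ apply continuity_2d_pt_mu | apply continuity_2d_pt_sigma | apply continuity_2d_pt_sigma_x
    | apply continuity_2d_pt_sigma_t | continuity_2d_step ].

Lemma mu_nonzero t y : 0 <= t <= T -> mu t y <> 0.
Proof. intros Ht. pose proof (mu_bounds t y Ht). pose proof mu_min_pos. lra. Qed.

(** [c] is only controlled on [[0, T]], so positivity of [μ] just outside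
    comes from continuity. *)
Lemma mu_pos_near t0 : 0 <= t0 <= T -> exists d, 0 < d /\
  forall s y, Rabs (s - t0) < d -> -1 <= y <= 2 -> 0 < mu s y.
Proof.
  intros Ht. pose proof mu_min_pos.
  destruct (continuity_2d_pt_unif_slice mu (-1) 2 t0 (fun y _ => continuity_2d_pt_mu t0 y)
              (mu_min / 2)) as [d [Hd H']]; [lra|].
  exists d; split; auto. intros s y Hs Hy. specialize (H' s y Hs Hy).
  pose proof (mu_bounds t0 y Ht). apply Rabs_def2 in H'. lra.
Qed.

Lemma continuity_2d_pt_sigma_mu_density_t s y : mu s y <> 0 ->
  continuity_2d_pt sigma_mu_density_t s y.
Proof. intros Hm. unfold sigma_mu_density_t. ns_continuity. now apply pow_nonzero. Qed.

Lemma sigma_mu_L2_derive t0 : 0 <= t0 <= T -> is_derive sigma_mu_L2 t0 (sigma_mu_L2_rate t0).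
Proof.
  intros Ht. destruct (mu_pos_near t0 Ht) as [d [Hd Hmu]].
  apply (RInt_param_derive sigma_mu_density sigma_mu_density_t t0 d Hd).
  - intros s y Hs Hy. specialize (Hmu s y Hs ltac:(lra)).
    unfold sigma_mu_density, sigma_mu_density_t, sigma_t, sigma, sigmaNS, pres, mu, gam, muc, gamc, mix in *.
    auto_derive; ex_derive_tac. unfold pDt; field; lra.
  - intros s y Hs Hy. specialize (Hmu s y Hs ltac:(lra)). split.
    + unfold sigma_mu_density. ns_continuity. lra.
    + apply continuity_2d_pt_sigma_mu_density_t. lra.
Qed.

Lemma sigma_mu_L2_rate_continuous t0 : 0 <= t0 <= T -> continuous sigma_mu_L2_rate t0.
Proof.
  intros Ht. destruct (mu_pos_near t0 Ht) as [d [Hd Hmu]].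
  apply RInt_param_continuous. exists d; split; auto. intros s y Hs Hy.
  apply continuity_2d_pt_sigma_mu_density_t. specialize (Hmu s y Hs ltac:(lra)). lra.
Qed.

Lemma schwarz_u t x : pDt (pDx u) t x = pDx (pDt u) t x.
Proof.
  unfold pDt, pDx. apply (Schwarz u t x).
  - exists (mkposreal 1 Rlt_0_1). intros; repeat split.
    + apply (smooth_ex_derive_t u u_smooth).
    + apply (smooth_ex_derive_x u u_smooth).
    + apply (smooth_ex_derive_t (pDx u)); smooth_tac.
    + apply (smooth_ex_derive_x (pDt u)); smooth_tac.
  - apply (smooth_continuity_2d (pDt (pDx u))); smooth_tac.
  - apply (smooth_continuity_2d (pDx (pDt u))); smooth_tac.
Qed.

Lemma sigma_mu_density_t_eq t y : 0 <= t <= T ->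
  sigma_mu_density_t t y
  = - sigma_mu_flux_x t y + 2 * sigma t y * accel_x t y - cubic_coef t y * sigma t y ^ 2 * pDx u t y.
Proof.
  intros Ht. destruct (NS_nonconservative t y Ht) as [D1 [D2 [_ D4]]].
  pose proof (rho_bounds t y Ht). pose proof (cv_bounds t y Ht). pose proof cv_min_pos.
  pose proof (mu_nonzero t y Ht).
  unfold sigma_mu_density_t, sigma_mu_flux_x, accel_x, cubic_coef, sigma_t.
  rewrite schwarz_u, D1, D2, D4.
  unfold sigma_x, sigma, sigmaNS, pres. fold (mu t y) (gam t y).
  field. repeat split; lra.
Qed.

Lemma RInt_sigma_mu_flux_x t : 0 <= t <= T -> RInt (fun y => sigma_mu_flux_x t y) 0 1 = 0.
Proof.
  intros Ht. apply (RInt_derive_periodic (fun y => sigma_mu_flux t y)).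
  - intros y _. pose proof (mu_nonzero t y Ht).
    unfold sigma_mu_flux, sigma_mu_flux_x, sigma_x, sigma, sigmaNS, pres, mu, gam, muc, gamc, mix in *.
    auto_derive; ex_derive_tac. unfold pDx; field; auto.
  - intros y _. apply continuous_slice. pose proof (mu_nonzero t y Ht).
    unfold sigma_mu_flux_x. ns_continuity; auto. now apply pow_nonzero.
  - destruct (periodic_at_1 t) as [Hu [_ [_ [Hc _]]]].
    unfold sigma_mu_flux, mu. rewrite sigma_periodic, Hu, Hc. auto.
Qed.

Lemma RInt_sigma_accel_x t :
  RInt (fun y => sigma t y * accel_x t y) 0 1 = - RInt (fun y => sigma_x t y * accel t y) 0 1.
Proof.
  assert (Hc1 : forall y, continuity_2d_pt (fun s y => sigma_x s y * accel s y) t y)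
    by (intros; unfold accel; ns_continuity).
  assert (Hc2 : forall y, continuity_2d_pt (fun s y => sigma s y * accel_x s y) t y)
    by (intros; unfold accel_x; ns_continuity).
  assert (Z0 : RInt (fun y => sigma_x t y * accel t y + sigma t y * accel_x t y) 0 1 = 0).
  { apply (RInt_derive_periodic (fun y => sigma t y * accel t y)).
    - intros y _. apply (is_derive_mult (fun y => sigma t y) (fun y => accel t y)).
      + unfold sigma_x, sigma, sigmaNS, pres, mu, gam, muc, gamc, mix.
        auto_derive; ex_derive_tac. unfold pDx; field.
      + unfold accel, accel_x. auto_derive; ex_derive_tac. unfold pDx; field.
      + intros; simpl; unfold mult; simpl; ring.
    - intros y _. apply (continuous_slice (fun s y => sigma_x s y * accel s y + sigma s y * accel_x s y)).
      apply continuity_2d_pt_plus; auto.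
    - destruct (periodic_at_1 t) as [Hu [Hux [Hut _]]].
      unfold accel. rewrite sigma_periodic, Hu, Hux, Hut. auto. }
  rewrite RInt_plusR in Z0 by (apply (ex_RInt_torus (fun s y => _ s y * _ s y)); auto).
  lra.
Qed.

Lemma sigma_mu_L2_rate_eq t : 0 <= t <= T ->
  sigma_mu_L2_rate t = - 2 * RInt (fun y => sigma_x t y ^ 2 / rho t y) 0 1
                       - RInt (fun y => cubic_coef t y * sigma t y ^ 2 * pDx u t y) 0 1.
Proof.
  intros Ht.
  assert (Ecub : ex_RInt (fun y => cubic_coef t y * sigma t y ^ 2 * pDx u t y) 0 1).
  { apply (ex_RInt_slice (fun s y => cubic_coef s y * sigma s y ^ 2 * pDx u s y)); [lra|].
    intros y _. pose proof (mu_nonzero t y Ht). pose proof (cv_bounds t y Ht). pose proof cv_min_pos.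
    unfold cubic_coef, gam, cv, gamc, cvc, mix in *. ns_continuity; lra. }
  assert (Eflux : ex_RInt (fun y => sigma_mu_flux_x t y) 0 1).
  { apply (ex_RInt_slice sigma_mu_flux_x); [lra|]. intros y _. pose proof (mu_nonzero t y Ht).
    unfold sigma_mu_flux_x. ns_continuity; auto. now apply pow_nonzero. }
  assert (Eacc : ex_RInt (fun y => sigma t y * accel_x t y) 0 1)
    by (apply (ex_RInt_torus (fun s y => sigma s y * accel_x s y)); intros; unfold accel_x; ns_continuity).
  unfold sigma_mu_L2_rate.
  rewrite (RInt_extR _ (fun y => ((-1) * sigma_mu_flux_x t y + 2 * (sigma t y * accel_x t y))
                                  - cubic_coef t y * sigma t y ^ 2 * pDx u t y)); [| lra |].
  2:{ intros y _. rewrite sigma_mu_density_t_eq; auto. ring. }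
  rewrite RInt_minusR, RInt_plusR, !RInt_scalR, RInt_sigma_mu_flux_x, RInt_sigma_accel_x
    by auto using ex_RInt_scalR, ex_RInt_plusR.
  rewrite (RInt_extR (fun y => sigma_x t y * accel t y) (fun y => sigma_x t y ^ 2 / rho t y)).
  - ring_R.
  - lra.
  - intros y _. destruct (NS_nonconservative t y Ht) as [_ [_ [D3 _]]].
    pose proof (rho_bounds t y Ht). unfold accel. rewrite D3. field. lra.
Qed.

Lemma ex_RInt_sigma_sq t : ex_RInt (fun y => sigma t y ^ 2) 0 1.
Proof. apply (ex_RInt_torus (fun s y => sigma s y ^ 2)). intros; ns_continuity. Qed.

Lemma ex_RInt_sigma_x_sq t : ex_RInt (fun y => sigma_x t y ^ 2) 0 1.
Proof. apply (ex_RInt_torus (fun s y => sigma_x s y ^ 2)). intros; ns_continuity. Qed.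

Lemma ex_RInt_sigma_mu_density t : 0 <= t <= T -> ex_RInt (fun y => sigma_mu_density t y) 0 1.
Proof.
  intros Ht. apply ex_RInt_slice; [lra|]. intros y _.
  unfold sigma_mu_density. ns_continuity. apply mu_nonzero, Ht.
Qed.

Lemma sigma_L2_nonneg t : 0 <= sigma_L2 t.
Proof. apply RInt_ge0; [lra | apply ex_RInt_sigma_sq | intros; apply pow2_ge_0]. Qed.

Lemma sigma_x_L2_nonneg t : 0 <= sigma_x_L2 t.
Proof. apply RInt_ge0; [lra | apply ex_RInt_sigma_x_sq | intros; apply pow2_ge_0]. Qed.

Lemma sigma_mu_L2_nonneg t : 0 <= t <= T -> 0 <= sigma_mu_L2 t.
Proof.
  intros Ht. apply RInt_ge0; [lra | apply ex_RInt_sigma_mu_density, Ht |].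
  intros y _. pose proof (mu_bounds t y Ht). pose proof mu_min_pos.
  apply Rdiv_le_0_compat; [apply pow2_ge_0 | lra].
Qed.

Lemma sigma_x_L2_continuous s : continuous sigma_x_L2 s.
Proof. apply (RInt_torus_continuous (fun s y => sigma_x s y ^ 2)). intros; ns_continuity. Qed.

Lemma ex_RInt_sigma_x_L2 a b : a <= b -> ex_RInt sigma_x_L2 a b.
Proof. intros Hab. apply ex_RInt_continuousR; auto. intros; apply sigma_x_L2_continuous. Qed.

Lemma sigma_sq_le_H1 t y : 0 <= y <= 1 -> sigma t y ^ 2 <= 2 * sigma_L2 t + 2 * sigma_x_L2 t.
Proof.
  intros Hy. apply (sq_le_H1_norm (fun y => sigma t y) (fun y => sigma_x t y)); auto.
  - intros z _. unfold sigma_x, sigma, sigmaNS, pres, mu, gam, muc, gamc, mix.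
    auto_derive; ex_derive_tac. unfold pDx; field.
  - intros; apply continuous_slice, continuity_2d_pt_sigma_x.
Qed.

Definition cubic_coef_max := (1 + 2 * ((gam_max - 1) / cv_min)) / mu_min.

Lemma cubic_coef_bounds t y : 0 <= t <= T -> 0 < cubic_coef t y <= cubic_coef_max.
Proof.
  intros Ht. pose proof (mu_bounds t y Ht). pose proof (cv_bounds t y Ht). pose proof (gam_bounds t y Ht).
  pose proof mu_min_pos. pose proof cv_min_pos. pose proof gam_min_gt1.
  assert (N1 : 0 <= (gam t y - 1) / cv t y) by (apply Rdiv_le_0_compat; lra).
  assert (N2 : (gam t y - 1) / cv t y <= (gam_max - 1) / cv_min).
  { unfold Rdiv. apply Rmult_le_compat; try lra.
    - left; apply Rinv_0_lt_compat; lra.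
    - apply Rinv_le_contravar; lra. }
  unfold cubic_coef, cubic_coef_max. split.
  - apply Rdiv_lt_0_compat; lra.
  - unfold Rdiv at 1 3. apply Rmult_le_compat; try lra.
    + left; apply Rinv_0_lt_compat; lra.
    + apply Rinv_le_contravar; lra.
Qed.

Lemma sigma_x_L2_div_le t : 0 <= t <= T ->
  sigma_x_L2 t / rho_hi <= RInt (fun y => sigma_x t y ^ 2 / rho t y) 0 1.
Proof.
  intros Ht. unfold sigma_x_L2.
  replace (RInt (fun y => sigma_x t y ^ 2) 0 1 / rho_hi)
    with (RInt (fun y => / rho_hi * sigma_x t y ^ 2) 0 1)
    by (rewrite RInt_scalR by apply ex_RInt_sigma_x_sq; unfold Rdiv; ring_R).
  apply RInt_leR; [lra | apply ex_RInt_scalR, ex_RInt_sigma_x_sq | |].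
  - apply (ex_RInt_torus (fun s y => sigma_x s y ^ 2 / rho s y)). intros y.
    ns_continuity. pose proof (rho_bounds t y Ht). lra.
  - intros y _. pose proof (rho_bounds t y Ht). pose proof (pow2_ge_0 (sigma_x t y)).
    unfold Rdiv. rewrite Rmult_comm. apply Rmult_le_compat_l; auto.
    apply Rinv_le_contravar; lra.
Qed.

Lemma neg_RInt_cubic_le t : 0 <= t <= T ->
  - RInt (fun y => cubic_coef t y * sigma t y ^ 2 * pDx u t y) 0 1
  <= cubic_coef_max * sqrt (2 * sigma_L2 t + 2 * sigma_x_L2 t) / 2 * (sigma_L2 t + ux_L2 t).
Proof.
  intros Ht. set (S := 2 * sigma_L2 t + 2 * sigma_x_L2 t).
  set (f := fun y => cubic_coef t y * sigma t y ^ 2 * pDx u t y).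
  assert (Ef : ex_RInt f 0 1).
  { apply (ex_RInt_slice (fun s y => cubic_coef s y * sigma s y ^ 2 * pDx u s y)); [lra|].
    intros y _. pose proof (mu_nonzero t y Ht). pose proof (cv_bounds t y Ht). pose proof cv_min_pos.
    unfold cubic_coef, gam, cv, gamc, cvc, mix in *. ns_continuity; lra. }
  replace (- RInt f 0 1) with (RInt (fun y => -1 * f y) 0 1) by (rewrite RInt_scalR; auto; ring_R).
  replace (cubic_coef_max * sqrt S / 2 * (sigma_L2 t + ux_L2 t))
    with (cubic_coef_max * sqrt S / 2 * RInt (fun y => sigma t y ^ 2 + pDx u t y ^ 2) 0 1 + 0 * (1 - 0))
    by (rewrite RInt_plusR; [unfold sigma_L2, ux_L2; ring_R | apply ex_RInt_sigma_sq | apply ex_RInt_ux_sq]).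
  apply RInt_le_affine; [lra | apply ex_RInt_scalR, Ef | |].
  - apply ex_RInt_plusR; [apply ex_RInt_sigma_sq | apply ex_RInt_ux_sq].
  - intros y Hy. unfold f.
    replace (cubic_coef_max * sqrt S / 2 * (sigma t y ^ 2 + pDx u t y ^ 2) + 0)
      with (cubic_coef_max * sqrt S * ((sigma t y ^ 2 + pDx u t y ^ 2) / 2)) by field.
    replace (-1 * (cubic_coef t y * sigma t y ^ 2 * pDx u t y))
      with (- (cubic_coef t y * sigma t y ^ 2 * pDx u t y)) by ring.
    apply neg_cubic_le; [apply cubic_coef_bounds; auto | apply sigma_sq_le_H1; auto].
Qed.

Lemma sigma_mu_L2_rate_le t : 0 <= t <= T ->
  sigma_mu_L2_rate t <= - 2 * (sigma_x_L2 t / rho_hi)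
    + cubic_coef_max * sqrt (2 * sigma_L2 t + 2 * sigma_x_L2 t) / 2 * (sigma_L2 t + ux_L2 t).
Proof.
  intros Ht. rewrite sigma_mu_L2_rate_eq by auto. unfold Rminus.
  apply Rplus_le_compat; [pose proof (sigma_x_L2_div_le t Ht); lra | apply neg_RInt_cubic_le, Ht].
Qed.

Definition ux_coef := 2 / mu_min ^ 2.
Definition ux_offset := 2 * p_max ^ 2 / mu_min ^ 2.

Lemma ux_coef_pos : 0 < ux_coef.
Proof. pose proof mu_min_pos. unfold ux_coef. apply Rdiv_lt_0_compat; [lra | apply pow_lt; lra]. Qed.

Lemma ux_offset_nonneg : 0 <= ux_offset.
Proof.
  pose proof mu_min_pos. unfold ux_offset.
  apply Rdiv_le_0_compat; [pose proof (pow2_ge_0 p_max); lra | apply pow_lt; lra].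
Qed.

Lemma ux_sq_le_sigma_sq t y : 0 <= t <= T -> pDx u t y ^ 2 <= ux_coef * sigma t y ^ 2 + ux_offset.
Proof.
  intros Ht. unfold ux_coef, ux_offset.
  pose proof (mu_bounds t y Ht). pose proof mu_min_pos. pose proof (pressure_bounds t y Ht).
  assert (E : pDx u t y = (sigma t y + pressure t y) / mu t y) by (rewrite sigma_eq; field; lra).
  rewrite E. pose proof (sq_plus_le (sigma t y) (pressure t y)).
  assert (pressure t y ^ 2 <= p_max ^ 2) by (apply pow_incr; lra).
  assert (mu_min ^ 2 <= mu t y ^ 2) by (apply pow_incr; lra).
  assert (0 < mu_min ^ 2) by (apply pow_lt; lra).
  replace (((sigma t y + pressure t y) / mu t y) ^ 2)
    with ((sigma t y + pressure t y) ^ 2 / mu t y ^ 2) by (field; lra).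
  replace (2 / mu_min ^ 2 * sigma t y ^ 2 + 2 * p_max ^ 2 / mu_min ^ 2)
    with ((2 * sigma t y ^ 2 + 2 * p_max ^ 2) / mu_min ^ 2) by (field; lra).
  apply Rle_trans with ((2 * sigma t y ^ 2 + 2 * p_max ^ 2) / mu t y ^ 2); unfold Rdiv.
  - apply Rmult_le_compat_r; [left; apply Rinv_0_lt_compat|]; lra.
  - apply Rmult_le_compat_l; [pose proof (pow2_ge_0 (sigma t y)); pose proof (pow2_ge_0 p_max); lra|].
    apply Rinv_le_contravar; lra.
Qed.

Lemma sigma_sq_le_ux_sq t y : 0 <= t <= T ->
  sigma t y ^ 2 <= 2 * mu_max ^ 2 * pDx u t y ^ 2 + 2 * p_max ^ 2.
Proof.
  intros Ht. pose proof (mu_bounds t y Ht). pose proof mu_min_pos. pose proof (pressure_bounds t y Ht).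
  rewrite sigma_eq. unfold Rminus.
  pose proof (sq_plus_le (mu t y * pDx u t y) (- pressure t y)).
  assert ((- pressure t y) ^ 2 <= p_max ^ 2)
    by (replace ((- pressure t y) ^ 2) with (pressure t y ^ 2) by ring; apply pow_incr; lra).
  assert ((mu t y * pDx u t y) ^ 2 <= mu_max ^ 2 * pDx u t y ^ 2).
  { rewrite Rpow_mult_distr. apply Rmult_le_compat_r; [apply pow2_ge_0 | apply pow_incr; lra]. }
  lra.
Qed.

Lemma sigma_L2_le_sigma_mu_L2 t : 0 <= t <= T -> sigma_L2 t <= mu_max * sigma_mu_L2 t.
Proof.
  intros Ht. replace (mu_max * sigma_mu_L2 t) with (mu_max * sigma_mu_L2 t + 0 * (1 - 0)) by ring.
  apply RInt_le_affine; [lra | apply ex_RInt_sigma_sq | apply ex_RInt_sigma_mu_density, Ht |].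
  intros y _. unfold sigma_mu_density. pose proof (mu_bounds t y Ht). pose proof mu_min_pos.
  replace (mu_max * (sigma t y ^ 2 / mu t y) + 0) with (sigma t y ^ 2 * (mu_max / mu t y)) by (field; lra).
  replace (sigma t y ^ 2) with (sigma t y ^ 2 * 1) at 1 by ring.
  apply Rmult_le_compat_l; [apply pow2_ge_0|].
  apply Rmult_le_reg_r with (mu t y); [lra|]. replace (mu_max / mu t y * mu t y) with mu_max by (field; lra).
  lra.
Qed.

Lemma sigma_mu_L2_le_sigma_L2 t : 0 <= t <= T -> sigma_mu_L2 t <= sigma_L2 t / mu_min.
Proof.
  intros Ht. pose proof mu_min_pos.
  replace (sigma_L2 t / mu_min) with (/ mu_min * sigma_L2 t + 0 * (1 - 0)) by (field; lra).
  apply RInt_le_affine; [lra | apply ex_RInt_sigma_mu_density, Ht | apply ex_RInt_sigma_sq |].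
  intros y _. unfold sigma_mu_density. pose proof (mu_bounds t y Ht). pose proof (pow2_ge_0 (sigma t y)).
  rewrite Rplus_0_r. unfold Rdiv. rewrite Rmult_comm.
  apply Rmult_le_compat_r; [auto | apply Rinv_le_contravar; lra].
Qed.

Lemma ux_L2_le_sigma_L2 t : 0 <= t <= T -> ux_L2 t <= ux_coef * sigma_L2 t + ux_offset.
Proof.
  intros Ht. replace ux_offset with (ux_offset * (1 - 0)) by ring.
  apply RInt_le_affine; [lra | apply ex_RInt_ux_sq | apply ex_RInt_sigma_sq |].
  intros; apply ux_sq_le_sigma_sq, Ht.
Qed.

Lemma sigma_L2_le_ux_L2 t : 0 <= t <= T -> sigma_L2 t <= 2 * mu_max ^ 2 * ux_L2 t + 2 * p_max ^ 2.
Proof.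
  intros Ht. replace (2 * p_max ^ 2) with (2 * p_max ^ 2 * (1 - 0)) by ring.
  apply RInt_le_affine; [lra | apply ex_RInt_sigma_sq | apply ex_RInt_ux_sq |].
  intros; apply sigma_sq_le_ux_sq, Ht.
Qed.

Definition growth_Z := 2 * mu_max ^ 2 + 1 + 2 * p_max ^ 2.
Definition growth_Y := mu_max + ux_coef * mu_max + ux_offset.
Definition gronwall_rate :=
  growth_Z / (2 * rho_hi) + rho_hi * cubic_coef_max ^ 2 * growth_Z * growth_Y / 4.

Lemma sigma_mu_L2_rate_le_gronwall t : 0 <= t <= T ->
  sigma_mu_L2_rate t <= - (sigma_x_L2 t / rho_hi)
    + gronwall_rate * ((ux_L2 t + 1) * (sigma_mu_L2 t + 1)).
Proof.
  intros Ht. pose proof (sigma_L2_le_sigma_mu_L2 t Ht). pose proof (ux_L2_le_sigma_L2 t Ht).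
  pose proof (sigma_L2_le_ux_L2 t Ht). pose proof (sigma_mu_L2_nonneg t Ht).
  pose proof (sigma_L2_nonneg t). pose proof (ux_L2_nonneg t).
  pose proof ux_coef_pos. pose proof ux_offset_nonneg. pose proof mu_max_pos.
  unfold gronwall_rate. apply (absorb_cubic_growth _ (sigma_L2 t));
    auto using sigma_x_L2_nonneg, sigma_mu_L2_rate_le.
  - unfold cubic_coef_max. pose proof mu_min_pos. pose proof cv_min_pos. pose proof gam_max_gt1.
    apply Rdiv_le_0_compat; [|lra]. assert (0 <= (gam_max - 1) / cv_min) by (apply Rdiv_le_0_compat; lra).
    lra.
  - unfold growth_Z. nra.
  - set (V := sigma_L2 t) in *. set (Y := sigma_mu_L2 t) in *.
    assert (ux_coef * V <= ux_coef * (mu_max * Y)) by (apply Rmult_le_compat_l; lra).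
    assert (0 <= ux_coef * mu_max) by (apply Rmult_le_pos; lra).
    assert (0 <= ux_offset * Y) by (apply Rmult_le_pos; lra).
    unfold growth_Y.
    replace ((mu_max + ux_coef * mu_max + ux_offset) * (Y + 1))
      with (mu_max * Y + ux_coef * (mu_max * Y) + ux_offset * Y + (mu_max + ux_coef * mu_max + ux_offset))
      by ring.
    lra.
Qed.

Lemma gronwall_rate_nonneg : 0 <= gronwall_rate.
Proof.
  pose proof mu_max_pos. pose proof ux_coef_pos. pose proof ux_offset_nonneg.
  pose proof (pow2_ge_0 mu_max). pose proof (pow2_ge_0 p_max). pose proof (pow2_ge_0 cubic_coef_max).
  assert (0 <= growth_Z) by (unfold growth_Z; lra).
  assert (0 <= growth_Y) by (unfold growth_Y; pose proof (Rmult_le_pos ux_coef mu_max); lra).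
  unfold gronwall_rate. apply Rplus_le_le_0_compat.
  - apply Rdiv_le_0_compat; lra.
  - apply Rdiv_le_0_compat; [|lra]. apply Rmult_le_pos; [apply Rmult_le_pos; [apply Rmult_le_pos|] |]; lra.
Qed.

Lemma ux_L2L2_bound_nonneg : 0 <= ux_L2L2_bound.
Proof.
  pose proof mu_min_pos. pose proof cv_min_pos. pose proof p_max_nonneg.
  assert (cv_min <= cv_max) by (unfold cv_min, cv_max, Rmin, Rmax; destruct Rle_dec; lra).
  assert (0 <= internal_energy_max) by (unfold internal_energy_max; repeat apply Rmult_le_pos; lra).
  assert (0 <= p_max ^ 2 / mu_min ^ 2) by (apply Rdiv_le_0_compat; [apply pow2_ge_0 | apply pow_lt; lra]).
  unfold ux_L2L2_bound. apply Rplus_le_le_0_compat.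
  - apply Rmult_le_pos; [apply Rlt_le, Rdiv_lt_0_compat |]; lra.
  - apply Rmult_le_pos; lra.
Qed.

Definition sigma_mu_bound S := (Rabs S / mu_min + 1) * exp (gronwall_rate * (ux_L2L2_bound + T)).

Lemma sigma_mu_bound_pos S : 0 < sigma_mu_bound S.
Proof.
  pose proof mu_min_pos. unfold sigma_mu_bound. apply Rmult_lt_0_compat; [|apply exp_pos].
  assert (0 <= Rabs S / mu_min) by (apply Rdiv_le_0_compat; [apply Rabs_pos | lra]). lra.
Qed.

Lemma sigma_mu_L2_0_le : sigma_mu_L2 0 <= Rabs (sigma_L2 0) / mu_min.
Proof.
  pose proof mu_min_pos. apply Rle_trans with (sigma_L2 0 / mu_min).
  - apply sigma_mu_L2_le_sigma_L2; lra.
  - unfold Rdiv. apply Rmult_le_compat_r; [left; apply Rinv_0_lt_compat; lra | apply Rle_abs].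
Qed.

Lemma sigma_mu_L2_le t : 0 <= t <= T -> sigma_mu_L2 t + 1 <= sigma_mu_bound (sigma_L2 0).
Proof.
  intros Ht. pose proof gronwall_rate_nonneg. pose proof sigma_mu_L2_0_le.
  set (k := fun s => gronwall_rate * (ux_L2 s + 1)).
  assert (Hk : forall s, continuous k s).
  { intros s. apply (continuous_scal_r gronwall_rate (fun s => ux_L2 s + 1)).
    apply (continuous_plus ux_L2 (fun _ => 1)); [apply ux_L2_continuous | apply continuous_const]. }
  assert (Hgr : sigma_mu_L2 t + 1 <= (sigma_mu_L2 0 + 1) * exp (RInt k 0 t)).
  { apply (Gronwall_log sigma_mu_L2 sigma_mu_L2_rate k T); auto; try lra.
    - exact sigma_mu_L2_derive.
    - exact sigma_mu_L2_rate_continuous.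
    - exact sigma_mu_L2_nonneg.
    - intros s Hs. pose proof (sigma_mu_L2_rate_le_gronwall s Hs). pose proof (sigma_x_L2_nonneg s).
      assert (0 <= sigma_x_L2 s / rho_hi) by (apply Rdiv_le_0_compat; lra).
      unfold k. rewrite Rmult_assoc. lra. }
  assert (Hint : RInt k 0 t <= gronwall_rate * (ux_L2L2_bound + T)).
  { unfold k. rewrite RInt_scalR, RInt_plusR, RInt_constR.
    - pose proof (RInt_ux_L2_le t Ht). apply Rmult_le_compat_l; lra.
    - apply ex_RInt_ux_L2; lra.
    - apply ex_RInt_constR.
    - apply ex_RInt_plusR; [apply ex_RInt_ux_L2; lra | apply ex_RInt_constR]. }
  apply Rle_trans with (1 := Hgr). unfold sigma_mu_bound.
  apply Rmult_le_compat; [pose proof (sigma_mu_L2_nonneg 0 ltac:(lra)); lra | left; apply exp_pos | lra |].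
  destruct Hint as [Hlt | ->]; [left; apply exp_increasing, Hlt | apply Rle_refl].
Qed.

Definition sigma_x_L2L2_bound S :=
  rho_hi * (Rabs S / mu_min + gronwall_rate * sigma_mu_bound S * (ux_L2L2_bound + T)).

Lemma sigma_x_L2L2_bound_nonneg S : 0 <= sigma_x_L2L2_bound S.
Proof.
  pose proof mu_min_pos. pose proof gronwall_rate_nonneg. pose proof ux_L2L2_bound_nonneg.
  pose proof (sigma_mu_bound_pos S).
  assert (0 <= Rabs S / mu_min) by (apply Rdiv_le_0_compat; [apply Rabs_pos | lra]).
  unfold sigma_x_L2L2_bound. apply Rmult_le_pos; [lra|].
  apply Rplus_le_le_0_compat; [lra|]. apply Rmult_le_pos; [apply Rmult_le_pos |]; lra.
Qed.

Lemma RInt_sigma_x_L2_le : RInt sigma_x_L2 0 T <= sigma_x_L2L2_bound (sigma_L2 0).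
Proof.
  pose proof gronwall_rate_nonneg. pose proof sigma_mu_L2_0_le. pose proof mu_min_pos.
  set (c0 := gronwall_rate * sigma_mu_bound (sigma_L2 0)).
  assert (Hc0 : 0 <= c0) by (pose proof (sigma_mu_bound_pos (sigma_L2 0)); unfold c0; apply Rmult_le_pos; lra).
  assert (Hdiss : RInt (fun s => / rho_hi * sigma_x_L2 s) 0 T + (sigma_mu_L2 T - sigma_mu_L2 0)
                  <= RInt (fun s => c0 * ux_L2 s + c0) 0 T).
  { apply RInt_dissipation_le with (dF := sigma_mu_L2_rate); try lra.
    - exact sigma_mu_L2_derive.
    - exact sigma_mu_L2_rate_continuous.
    - apply ex_RInt_scalR, ex_RInt_sigma_x_L2; lra.
    - apply ex_RInt_plusR; [apply ex_RInt_scalR, ex_RInt_ux_L2; lra | apply ex_RInt_constR].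
    - intros s Hs. pose proof (sigma_mu_L2_rate_le_gronwall s Hs). pose proof (sigma_mu_L2_le s Hs).
      pose proof (ux_L2_nonneg s).
      assert (gronwall_rate * ((ux_L2 s + 1) * (sigma_mu_L2 s + 1)) <= c0 * ux_L2 s + c0).
      { unfold c0. replace (gronwall_rate * sigma_mu_bound (sigma_L2 0) * ux_L2 s
                             + gronwall_rate * sigma_mu_bound (sigma_L2 0))
          with (gronwall_rate * ((ux_L2 s + 1) * sigma_mu_bound (sigma_L2 0))) by ring.
        apply Rmult_le_compat_l; [lra | apply Rmult_le_compat_l; lra]. }
      replace (/ rho_hi * sigma_x_L2 s) with (sigma_x_L2 s / rho_hi) by (field; lra). lra. }
  rewrite (RInt_scalR sigma_x_L2) in Hdiss by (apply ex_RInt_sigma_x_L2; lra).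
  rewrite RInt_plusR, RInt_scalR, RInt_constR in Hdiss;
    [| apply ex_RInt_ux_L2; lra | apply ex_RInt_scalR, ex_RInt_ux_L2; lra | apply ex_RInt_constR].
  pose proof (RInt_ux_L2_le T ltac:(lra)). pose proof (sigma_mu_L2_nonneg T ltac:(lra)).
  assert (c0 * RInt ux_L2 0 T <= c0 * ux_L2L2_bound) by (apply Rmult_le_compat_l; lra).
  apply Rmult_le_reg_l with (/ rho_hi); [apply Rinv_0_lt_compat; lra|].
  unfold sigma_x_L2L2_bound. fold c0.
  replace (/ rho_hi * (rho_hi * (Rabs (sigma_L2 0) / mu_min + c0 * (ux_L2L2_bound + T))))
    with (Rabs (sigma_L2 0) / mu_min + c0 * (ux_L2L2_bound + T)) by (field; lra).
  lra.
Qed.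

Definition C8 S := ux_coef * mu_max * sigma_mu_bound S + ux_offset + 1.
Definition C9 S :=
  ux_coef * (2 * mu_max * sigma_mu_bound S * T + 2 * sigma_x_L2L2_bound S) + ux_offset * T + 1.

Lemma C8_pos S : 0 < C8 S.
Proof.
  pose proof ux_coef_pos. pose proof ux_offset_nonneg. pose proof mu_max_pos.
  pose proof (sigma_mu_bound_pos S).
  assert (0 <= ux_coef * mu_max * sigma_mu_bound S) by (apply Rmult_le_pos; [apply Rmult_le_pos |]; lra).
  unfold C8. lra.
Qed.

Lemma C9_pos S : 0 < C9 S.
Proof.
  pose proof ux_coef_pos. pose proof ux_offset_nonneg. pose proof mu_max_pos.
  pose proof (sigma_mu_bound_pos S). pose proof (sigma_x_L2L2_bound_nonneg S).
  assert (0 <= mu_max * sigma_mu_bound S * T) by (apply Rmult_le_pos; [apply Rmult_le_pos |]; lra).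
  assert (0 <= ux_coef * (2 * mu_max * sigma_mu_bound S * T + 2 * sigma_x_L2L2_bound S))
    by (apply Rmult_le_pos; lra).
  assert (0 <= ux_offset * T) by (apply Rmult_le_pos; lra).
  unfold C9. lra.
Qed.

Lemma sigma_L2_le_bound t : 0 <= t <= T -> sigma_L2 t <= mu_max * sigma_mu_bound (sigma_L2 0).
Proof.
  intros Ht. pose proof mu_max_pos. pose proof (sigma_mu_L2_le t Ht).
  apply Rle_trans with (mu_max * sigma_mu_L2 t); [apply sigma_L2_le_sigma_mu_L2, Ht|].
  apply Rmult_le_compat_l; lra.
Qed.

Lemma ux_L2_le_C8 t : 0 <= t <= T -> ux_L2 t <= C8 (sigma_L2 0).
Proof.
  intros Ht. pose proof ux_coef_pos. pose proof (ux_L2_le_sigma_L2 t Ht).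
  assert (ux_coef * sigma_L2 t <= ux_coef * (mu_max * sigma_mu_bound (sigma_L2 0)))
    by (apply Rmult_le_compat_l; [lra | apply sigma_L2_le_bound, Ht]).
  unfold C8. lra.
Qed.

Lemma Linf_ux_sq_le t : 0 <= t <= T ->
  Linf_norm (pDx u t) ^ 2
  <= ux_coef * (2 * mu_max * sigma_mu_bound (sigma_L2 0) + 2 * sigma_x_L2 t) + ux_offset.
Proof.
  intros Ht. pose proof ux_coef_pos. pose proof ux_offset_nonneg. pose proof (sigma_x_L2_nonneg t).
  pose proof (sigma_L2_le_bound t Ht). pose proof (sigma_L2_nonneg t).
  apply Linf_norm_sq_le.
  - assert (0 <= ux_coef * (2 * mu_max * sigma_mu_bound (sigma_L2 0) + 2 * sigma_x_L2 t))
      by (apply Rmult_le_pos; lra).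
    lra.
  - intros x Hx. pose proof (ux_sq_le_sigma_sq t x Ht). pose proof (sigma_sq_le_H1 t x Hx).
    assert (ux_coef * sigma t x ^ 2
            <= ux_coef * (2 * mu_max * sigma_mu_bound (sigma_L2 0) + 2 * sigma_x_L2 t))
      by (apply Rmult_le_compat_l; lra).
    lra.
Qed.

Lemma RInt_Linf_ux_sq_le_C9 : RInt (fun t => Linf_norm (pDx u t) ^ 2) 0 T <= C9 (sigma_L2 0).
Proof.
  pose proof ux_coef_pos. pose proof RInt_sigma_x_L2_le.
  set (B := 2 * mu_max * sigma_mu_bound (sigma_L2 0)).
  apply Rle_trans with (RInt (fun t => ux_coef * B + ux_offset + (2 * ux_coef) * sigma_x_L2 t) 0 T).
  - apply RInt_leR; [lra | | |].
    + apply ex_RInt_continuousR; [lra|]. intros t _.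
      apply continuous_sq, (Linf_norm_continuous (pDx u)). intros.
      apply (smooth_continuity_2d (pDx u)); smooth_tac.
    + apply ex_RInt_plusR; [apply ex_RInt_constR | apply ex_RInt_scalR, ex_RInt_sigma_x_L2; lra].
    + intros t Ht. pose proof (Linf_ux_sq_le t Ht). unfold B. lra.
  - rewrite RInt_plusR, RInt_constR, RInt_scalR;
      [| apply ex_RInt_sigma_x_L2; lra | apply ex_RInt_constR | apply ex_RInt_scalR, ex_RInt_sigma_x_L2; lra].
    assert (2 * ux_coef * RInt sigma_x_L2 0 T <= 2 * ux_coef * sigma_x_L2L2_bound (sigma_L2 0))
      by (apply Rmult_le_compat_l; lra).
    unfold C9. fold B.
    replace (ux_coef * (B * T + 2 * sigma_x_L2L2_bound (sigma_L2 0)) + ux_offset * T + 1)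
      with ((ux_coef * B + ux_offset) * (T - 0) + 2 * ux_coef * sigma_x_L2L2_bound (sigma_L2 0) + 1)
      by ring.
    lra.
Qed.

End NS_estimates.


Theorem mainTheorem5 :
  forall (mu_p mu_m gam_p gam_m cv_p cv_m : R)
         (T rho_lo rho_hi th_lo th_hi S0 E0 : R),
    0 < mu_p -> 0 < mu_m -> 1 < gam_p -> 1 < gam_m -> 0 < cv_p -> 0 < cv_m ->
    0 < T -> 0 < rho_lo -> 0 < rho_hi -> 0 < th_lo -> 0 < th_hi ->
    exists C8 C9 : R, 0 < C8 /\ 0 < C9 /\
    forall c rho theta u : field,
      smooth c -> smooth rho -> smooth theta -> smooth u ->
      periodic1 c -> periodic1 rho -> periodic1 theta -> periodic1 u ->
      NS_system mu_p mu_m gam_p gam_m cv_p cv_m T c rho theta u ->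
      (forall t x, 0 <= t <= T -> 0 <= c t x <= 1) ->
      (forall t x, 0 <= t <= T -> rho_lo <= rho t x <= rho_hi) ->
      (forall t x, 0 <= t <= T -> th_lo <= theta t x <= th_hi) ->
      RInt (fun x => (sigmaNS mu_p mu_m gam_p gam_m c rho theta u 0 x) ^ 2) 0 1 = S0 ->
      RInt (fun x => rho 0 x * energyNS cv_p cv_m c theta u 0 x) 0 1 = E0 ->
      (forall t, 0 <= t <= T -> RInt (fun x => (pDx u t x) ^ 2) 0 1 <= C8) /\
      RInt (fun t => (Linf_norm (fun x => pDx u t x)) ^ 2) 0 T <= C9.
Proof.
  intros mu_p mu_m gam_p gam_m cv_p cv_m T rho_lo rho_hi th_lo th_hi S0 E0
    Hmu_p Hmu_m Hgam_p Hgam_m Hcv_p Hcv_m HT Hrho_lo Hrho_hi Hth_lo Hth_hi.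
  exists (C8 mu_p mu_m gam_p gam_m cv_p cv_m T rho_hi th_hi S0),
         (C9 mu_p mu_m gam_p gam_m cv_p cv_m T rho_hi th_hi S0).
  split; [apply C8_pos; auto |]. split; [apply C9_pos; auto |].
  intros c rho theta u Hc Hrho Htheta Hu Pc Prho Ptheta Pu HNS Bc Brho Btheta HS0 _.
  rewrite <- HS0. split.
  - intros t. apply (ux_L2_le_C8 mu_p mu_m gam_p gam_m cv_p cv_m T rho_lo rho_hi th_lo th_hi); auto.
  - apply (RInt_Linf_ux_sq_le_C9 mu_p mu_m gam_p gam_m cv_p cv_m T rho_lo rho_hi th_lo th_hi); auto.
Qed.
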